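(* The following equalities hold: \[ \hat R^+=R^+,\qquad \hat S^+=S^+,\qquad \hat R^-=R^-,\qquad \hat S^-=S^- . \]
   Context: $G$ is an unbounded multiply connected region of connectivity $m$ with $\infty\in G$ and $0\in G$. Its boundary is $\Gamma=\Gamma_1\cup\dots\cup\Gamma_m$, consisting of simple, non-intersecting, smooth, clockwise oriented closed curves. $G^-:=(\mathbb C\cup\{\infty\})\setminus(G\cup\Gamma)$ is the union of the bounded simply connected regions $G_k$ enclosed by $\Gamma_k$. Each $\Gamma_k$ is parametrized by a $2\pi$-periodic, twice continuously differentiable function $\eta_k$ with $\dot\eta_k\ne0$. $J$ is the disjoint union of $J_k=[0,2\pi]$, and $\eta=\eta_k$ on $J_k$. $H$ is the space of real functions on $J$ that are Hölder continuous and $2\pi$-periodic on each $J_k$. Functions on boundaries are identified with functions on $J$ via the parametrization. $A$ is a nonvanishing complex function on $\Gamma$ with continuously differentiable parametric form on $J$. Fix $z_0\in G_m$ and let $\Psi(z)=1/(z-z_0)$, $\hat G=\Psi(G)$ (bounded), $\hat G^-=\Psi(G^-)$ (unbounded), $\hat\Gamma=\Psi(\Gamma)$ with parametrization $\zeta(s)=1/(\eta(s)-z_0)$, and $\hat A(s)=\zeta(s)A(s)$. Analytic functions are continuous up to the boundary; boundary values are taken from the indicated region. The spaces are defined as follows: \[ \begin{aligned} R^+&=\{\gamma\in H:\gamma=\operatorname{Re}[Af^+],\ f \text{ analytic in } G,\ f(\infty)=0\},\\ S^+&=\{\gamma\in H:\gamma=Af^+,\ f \text{ analytic in } G,\ f(\infty)=0\},\\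 R^-&=\{\gamma\in H:\gamma=\operatorname{Re}[Ag^-],\ g \text{ analytic in } G^-\},\\ S^-&=\{\gamma\in H:\gamma=Ag^-,\ g \text{ analytic in } G^-\},\\ \hat R^+&=\{\gamma\in H:\gamma=\operatorname{Re}[\hat A\hat f^+],\ \hat f \text{ analytic in } \hat G\},\\ \hat S^+&=\{\gamma\in H:\gamma=\hat A\hat f^+,\ \hat f \text{ analytic in } \hat G\},\\ \hat R^-&=\{\gamma\in H:\gamma=\operatorname{Re}[\hat A\hat g^-],\ \hat g \text{ analytic in } \hat G^-,\ \hat g(\infty)=0\},\\ \hat S^-&=\{\gamma\in H:\gamma=\hat A\hat g^-,\ \hat g \text{ analytic in } \hat G^-,\ \hat g(\infty)=0\}. \end{aligned} \] In the definitions of the $S$-spaces, the function $Af^+$ (resp. $Ag^-$, $\hat A\hat f^+$, $\hat A\hat g^-$) is required to be real. *)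

From Stdlib Require Import Reals.
From Coquelicot Require Import Coquelicot.
Open Scope R_scope.

Definition C_holo_at (f : C -> C) (z : C) : Prop :=
  exists l : C, @is_derive C_AbsRing C_NormedModule f z l.

Definition C_holo_on (D : C -> Prop) (f : C -> C) : Prop :=
  forall z, D z -> C_holo_at f z.

(* analyticity at infinity with value [v] at infinity:
   w |-> f(1/w) (with value v at w = 0) is complex differentiable at 0 *)
Definition C_holo_at_infty (f : C -> C) (v : C) : Prop :=
  C_holo_at (fun w => if Ceq_dec w 0 then v else f (Cinv w)) 0.

Definition C_open (D : C -> Prop) : Prop := @open C_UniformSpace D.

Definition C_connected (S : C -> Prop) : Prop :=
  forall U V : C -> Prop, C_open U -> C_open V ->
    (forall z, S z -> U z \/ V z) ->
    (exists z, S z /\ U z) -> (exists z, S z /\ V z) ->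
    exists z, S z /\ U z /\ V z.

Definition C_closure (D : C -> Prop) (z : C) : Prop :=
  forall eps, 0 < eps -> exists w, D w /\ Cmod (Cminus w z) < eps.

Definition C_bounded (D : C -> Prop) : Prop :=
  exists r, forall z, D z -> Cmod z <= r.

(* the connected component of z in the set D is bounded *)
Definition bounded_component (D : C -> Prop) (z : C) : Prop :=
  D z /\ exists r, forall S, C_connected S -> (forall w, S w -> D w) -> S z ->
     forall w, S w -> Cmod w <= r.

(* f, restricted to D, extends continuously to the point p, the boundary value
   at p being f p ("continuous up to the boundary, values taken from D") *)
Definition cont_from (D : C -> Prop) (f : C -> C) (p : C) : Prop :=
  filterlim f (within D (@locally C_UniformSpace p)) (@locally C_UniformSpace (f p)).

Definition periodic2pi {T} (u : R -> T) : Prop := forall t, u (t + 2 * PI) = u t.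

Definition C1_real (u : R -> R) : Prop :=
  (forall t, ex_derive u t) /\ (forall t, continuous (Derive u) t).
Definition C2_real (u : R -> R) : Prop :=
  (forall t, ex_derive u t) /\ (forall t, ex_derive (Derive u) t) /\
  (forall t, continuous (Derive_n u 2) t).

Definition C1_curve (u : R -> C) : Prop :=
  C1_real (fun t => Re (u t)) /\ C1_real (fun t => Im (u t)).
Definition C2_curve (u : R -> C) : Prop :=
  C2_real (fun t => Re (u t)) /\ C2_real (fun t => Im (u t)).
Definition dcurve (u : R -> C) (t : R) : C :=
  (Derive (fun s => Re (u s)) t, Derive (fun s => Im (u s)) t).

Definition winding (u : R -> C) (z : C) : R :=
  / (2 * PI) * RInt (fun t => Im (Cdiv (dcurve u t) (Cminus (u t) z))) 0 (2 * PI).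

Definition holder_02pi (u : R -> R) : Prop :=
  exists alpha K, 0 < alpha <= 1 /\ 0 <= K /\
    forall s t, 0 <= s <= 2 * PI -> 0 <= t <= 2 * PI -> s <> t ->
      Rabs (u s - u t) <= K * Rpower (Rabs (s - t)) alpha.

(** Functions on J = disjoint union of J_k, k < m, are
    represented as [nat -> R -> _] (only k < m matters); they are 2 pi-periodic
    functions on R, identified with their restriction to J_k = [0, 2 pi]. *)

Definition Gamma_k (eta : nat -> R -> C) (k : nat) (z : C) : Prop :=
  exists t, eta k t = z.
Definition Gamma (m : nat) (eta : nat -> R -> C) (z : C) : Prop :=
  exists k, (k < m)%nat /\ Gamma_k eta k z.
Definition inside (eta : nat -> R -> C) (k : nat) (z : C) : Prop :=
  bounded_component (fun w => ~ Gamma_k eta k w) z.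

Definition Gminus (m : nat) (eta : nat -> R -> C) (G : C -> Prop) (z : C) : Prop :=
  ~ G z /\ ~ Gamma m eta z.

Definition setting (m : nat) (eta : nat -> R -> C) (G : C -> Prop) : Prop :=
  (1 <= m)%nat /\
  (forall k, (k < m)%nat -> periodic2pi (eta k) /\ C2_curve (eta k) /\
      forall t, dcurve (eta k) t <> 0%C) /\
  (forall k s t, (k < m)%nat -> 0 <= s < 2 * PI -> 0 <= t < 2 * PI ->
      eta k s = eta k t -> s = t) /\
  (forall k l s t, (k < m)%nat -> (l < m)%nat -> k <> l -> eta k s <> eta l t) /\
  C_open G /\ C_connected G /\ G 0%C /\
  (exists r, forall z, r < Cmod z -> G z) /\
  (forall z, (C_closure G z /\ ~ G z) <-> Gamma m eta z) /\
  (forall z, Gminus m eta G z <-> exists k, (k < m)%nat /\ inside eta k z) /\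
  (forall k z, (k < m)%nat -> inside eta k z -> winding (eta k) z = -1).

Definition in_H (m : nat) (gam : nat -> R -> R) : Prop :=
  forall k, (k < m)%nat -> periodic2pi (gam k) /\ holder_02pi (gam k).

Definition analytic_G_plus (m : nat) (eta : nat -> R -> C) (G : C -> Prop)
  (f : C -> C) : Prop :=
  C_holo_on G f /\ C_holo_at_infty f 0%C /\
  forall p, Gamma m eta p -> cont_from G f p.

Definition analytic_G_minus (m : nat) (eta : nat -> R -> C) (G : C -> Prop)
  (g : C -> C) : Prop :=
  C_holo_on (Gminus m eta G) g /\
  forall p, Gamma m eta p -> cont_from (Gminus m eta G) g p.

Definition Rplus_sp m eta G (A : nat -> R -> C) (gam : nat -> R -> R) : Prop :=
  in_H m gam /\ exists f, analytic_G_plus m eta G f /\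
    forall k s, (k < m)%nat -> gam k s = Re (Cmult (A k s) (f (eta k s))).
Definition Splus_sp m eta G (A : nat -> R -> C) (gam : nat -> R -> R) : Prop :=
  in_H m gam /\ exists f, analytic_G_plus m eta G f /\
    forall k s, (k < m)%nat -> RtoC (gam k s) = Cmult (A k s) (f (eta k s)).
Definition Rminus_sp m eta G (A : nat -> R -> C) (gam : nat -> R -> R) : Prop :=
  in_H m gam /\ exists g, analytic_G_minus m eta G g /\
    forall k s, (k < m)%nat -> gam k s = Re (Cmult (A k s) (g (eta k s))).
Definition Sminus_sp m eta G (A : nat -> R -> C) (gam : nat -> R -> R) : Prop :=
  in_H m gam /\ exists g, analytic_G_minus m eta G g /\
    forall k s, (k < m)%nat -> RtoC (gam k s) = Cmult (A k s) (g (eta k s)).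

Definition Psi (z0 z : C) : C := Cinv (Cminus z z0).

(* hat G = Psi(G), with Psi(infinity) = 0 *)
Definition Ghat (z0 : C) (G : C -> Prop) (w : C) : Prop :=
  w = 0%C \/ exists z, G z /\ w = Psi z0 z.
(* hat G^- = Psi(G^-) minus the point Psi(z0) = infinity *)
Definition Gminushat m eta (z0 : C) (G : C -> Prop) (w : C) : Prop :=
  exists z, Gminus m eta G z /\ z <> z0 /\ w = Psi z0 z.
Definition Gammahat m eta (z0 : C) (w : C) : Prop :=
  exists z, Gamma m eta z /\ w = Psi z0 z.
Definition zeta (z0 : C) (eta : nat -> R -> C) (k : nat) (s : R) : C :=
  Psi z0 (eta k s).
Definition Ahat (z0 : C) (eta : nat -> R -> C) (A : nat -> R -> C) k s : C :=
  Cmult (zeta z0 eta k s) (A k s).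

Definition analytic_Ghat_plus m eta z0 G (f : C -> C) : Prop :=
  C_holo_on (Ghat z0 G) f /\
  forall p, Gammahat m eta z0 p -> cont_from (Ghat z0 G) f p.
Definition analytic_Ghat_minus m eta z0 G (g : C -> C) : Prop :=
  C_holo_on (Gminushat m eta z0 G) g /\ C_holo_at_infty g 0%C /\
  forall p, Gammahat m eta z0 p -> cont_from (Gminushat m eta z0 G) g p.

Definition Rplushat_sp m eta G z0 (A : nat -> R -> C) (gam : nat -> R -> R) : Prop :=
  in_H m gam /\ exists f, analytic_Ghat_plus m eta z0 G f /\
    forall k s, (k < m)%nat ->
      gam k s = Re (Cmult (Ahat z0 eta A k s) (f (zeta z0 eta k s))).
Definition Splushat_sp m eta G z0 (A : nat -> R -> C) (gam : nat -> R -> R) : Prop :=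
  in_H m gam /\ exists f, analytic_Ghat_plus m eta z0 G f /\
    forall k s, (k < m)%nat ->
      RtoC (gam k s) = Cmult (Ahat z0 eta A k s) (f (zeta z0 eta k s)).
Definition Rminushat_sp m eta G z0 (A : nat -> R -> C) (gam : nat -> R -> R) : Prop :=
  in_H m gam /\ exists g, analytic_Ghat_minus m eta z0 G g /\
    forall k s, (k < m)%nat ->
      gam k s = Re (Cmult (Ahat z0 eta A k s) (g (zeta z0 eta k s))).
Definition Sminushat_sp m eta G z0 (A : nat -> R -> C) (gam : nat -> R -> R) : Prop :=
  in_H m gam /\ exists g, analytic_Ghat_minus m eta z0 G g /\
    forall k s, (k < m)%nat ->
      RtoC (gam k s) = Cmult (Ahat z0 eta A k s) (g (zeta z0 eta k s)).

(* [Psi z = 1 / (z - z0)] maps [G] onto [hat G] and [G^-] onto [hat G^-], exchanging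
   infinity with [0] and [z0] with infinity, and [zeta = Psi o eta].  The correspondence
   [f z = Psi z * fhat (Psi z)] therefore preserves analyticity away from these points, and
   it preserves boundary values: [A f(eta) = A zeta fhat(zeta) = Ahat fhat(zeta)].  At the
   exchanged points the normalisations at infinity are exactly what is needed: for instance
   [fhat w = f (z0 + 1/w) / w] has a removable singularity at [w = 0] because [f] vanishes at
   infinity.  The removable singularity theorem is derived from Goursat's lemma through
   Cauchy's formula on a square, whose winding factor is shown to be nonzero by bounding its
   imaginary part from below. *)

From Stdlib Require Import Reals Lra Lia Classical.
From Coquelicot Require Import Coquelicot.
Open Scope R_scope.

Ltac Cring := apply injective_projections; simpl; ring.

Lemma Cmod_sub_sym (u v : C) : Cmod (u - v) = Cmod (v - u).
Proof. replace (u - v)%C with (- (v - u))%C by Cring. apply Cmod_opp. Qed.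

Lemma Cmod_sub_pos (z u : C) : z <> u -> 0 < Cmod (z - u).
Proof.
  intros H. apply Cmod_gt_0. intro E. apply H.
  replace z with ((z - u) + u)%C by ring. rewrite E. ring.
Qed.

Lemma Cminus_0_r (u : C) : (u - 0)%C = u.
Proof. Cring. Qed.

Lemma Cmod_le_abs_sum (z : C) : Cmod z <= Rabs (fst z) + Rabs (snd z).
Proof.
  unfold Cmod. rewrite <- (sqrt_Rsqr (Rabs (fst z) + Rabs (snd z))).
  2: { generalize (Rabs_pos (fst z)) (Rabs_pos (snd z)); lra. }
  apply sqrt_le_1_alt. unfold Rsqr. rewrite <- !Rsqr_pow2, (Rsqr_abs (fst z)), (Rsqr_abs (snd z)).
  unfold Rsqr. generalize (Rabs_pos (fst z)) (Rabs_pos (snd z)). nra.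
Qed.

Lemma norm_C_R_Cmod (x : C) : @norm R_AbsRing C_R_NormedModule x = Cmod x.
Proof.
  unfold norm; simpl. unfold prod_norm, Cmod; simpl. unfold norm; simpl. unfold abs; simpl.
  rewrite !Rmult_1_r, <- !Rabs_mult, !Rabs_pos_eq by apply Rle_0_sqr. reflexivity.
Qed.

Lemma locally_C_ball (z : C) (P : C -> Prop) :
  @locally C_UniformSpace z P <-> exists d, 0 < d /\ forall w, Cmod (w - z) < d -> P w.
Proof.
  split.
  - intros [eps H]. exists eps. split; [apply cond_pos|].
    intros w Hw. apply H. apply C_NormedModule_mixin_compat1. exact Hw.
  - intros [d [Hd H]].
    generalize (@locally_ball_norm C_AbsRing C_NormedModule z (mkposreal d Hd)).
    apply filter_imp. exact H.
Qed.

Lemma locally_C_AbsRing_ball (z : C) (P : C -> Prop) :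
  @locally (AbsRing_UniformSpace C_AbsRing) z P <->
  exists d, 0 < d /\ forall w, Cmod (w - z) < d -> P w.
Proof.
  split.
  - intros [eps H]. exists eps. split; [apply cond_pos | exact H].
  - intros [d [Hd H]]. exists (mkposreal d Hd). exact H.
Qed.

Lemma locally_R_ball (x0 : R) (P : R -> Prop) :
  @locally R_UniformSpace x0 P <-> exists d, 0 < d /\ forall x, Rabs (x - x0) < d -> P x.
Proof.
  split.
  - intros [eps H]. exists eps. split; [apply cond_pos | exact H].
  - intros [d [Hd H]]. exists (mkposreal d Hd). exact H.
Qed.

(** * Complex derivatives *)

Definition is_Cderive (f : C -> C) (z l : C) : Prop :=
  @is_derive C_AbsRing C_NormedModule f z l.

Lemma is_Cderive_eps (f : C -> C) (z l : C) :
  is_Cderive f z l <->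
  forall eps, 0 < eps -> exists d, 0 < d /\ forall w, Cmod (w - z) < d ->
    Cmod (f w - f z - l * (w - z)) <= eps * Cmod (w - z).
Proof.
  split.
  - intros [_ H] eps Heps.
    destruct (proj1 (locally_C_AbsRing_ball _ _) (H z (fun P HP => HP) (mkposreal eps Heps)))
      as [d [Hd H1]].
    exists d. split; [exact Hd|]. intros w Hw. rewrite (Cmult_comm l). exact (H1 w Hw).
  - intros H. split; [apply is_linear_scal_l|].
    intros x Hx.
    apply (@is_filter_lim_locally_unique C_AbsRing (AbsRing_NormedModule C_AbsRing)) in Hx.
    subst x. intros eps. apply locally_C_AbsRing_ball.
    destruct (H eps (cond_pos eps)) as [d [Hd H1]].
    exists d. split; [exact Hd|]. intros w Hw.
    specialize (H1 w Hw). rewrite (Cmult_comm l) in H1. exact H1.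
Qed.

(* Coquelicot states its generic rules with [C] seen as a normed module over
   itself, a structure that is not convertible to [C_NormedModule]. *)
Lemma is_Cderive_AbsRing f z l :
  is_Cderive f z l <-> @is_derive C_AbsRing (AbsRing_NormedModule C_AbsRing) f z l.
Proof. split; intros [_ H]; (split; [apply is_linear_scal_l | exact H]). Qed.

Lemma is_Cderive_ext_loc f g z l d : 0 < d ->
  (forall w, Cmod (w - z) < d -> f w = g w) -> is_Cderive f z l -> is_Cderive g z l.
Proof.
  intros Hd E. apply is_derive_ext_loc. apply locally_C_AbsRing_ball. exists d. auto.
Qed.

Lemma is_Cderive_const (k z : C) : is_Cderive (fun _ => k) z 0%C.
Proof. exact (is_derive_const k z). Qed.

Lemma is_Cderive_id (z : C) : is_Cderive (fun w => w) z 1%C.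
Proof. apply is_Cderive_AbsRing. exact (is_derive_id z). Qed.

Lemma is_Cderive_plus f g z lf lg : is_Cderive f z lf -> is_Cderive g z lg ->
  is_Cderive (fun w => f w + g w)%C z (lf + lg)%C.
Proof. intros Hf Hg. exact (is_derive_plus f g z lf lg Hf Hg). Qed.

Lemma is_Cderive_minus f g z lf lg : is_Cderive f z lf -> is_Cderive g z lg ->
  is_Cderive (fun w => f w - g w)%C z (lf - lg)%C.
Proof. intros Hf Hg. exact (is_derive_minus f g z lf lg Hf Hg). Qed.

Lemma is_Cderive_mult f g z lf lg : is_Cderive f z lf -> is_Cderive g z lg ->
  is_Cderive (fun w => f w * g w)%C z (lf * g z + f z * lg)%C.
Proof.
  intros Hf Hg.
  apply (proj1 (is_Cderive_AbsRing _ _ _)) in Hf, Hg. apply is_Cderive_AbsRing.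
  eapply filterdiff_ext_lin.
  { exact (@filterdiff_mult_fct C_AbsRing (AbsRing_NormedModule C_AbsRing)
             f g z _ _ Cmult_comm Hf Hg). }
  intros y. change ((y * lf) * g z + f z * (y * lg) = y * (lf * g z + f z * lg))%C. ring.
Qed.

Lemma is_Cderive_comp f g z lf lg : is_Cderive f (g z) lf -> is_Cderive g z lg ->
  is_Cderive (fun w => f (g w)) z (lf * lg)%C.
Proof.
  intros Hf Hg. apply (proj1 (is_Cderive_AbsRing _ _ _)) in Hg. rewrite Cmult_comm.
  exact (is_derive_comp f g z lf lg Hf Hg).
Qed.

Lemma is_Cderive_inv (z : C) : z <> 0%C -> is_Cderive (fun w => / w)%C z (- / (z * z))%C.
Proof.
  intros Hz. apply is_Cderive_eps. intros eps Heps.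
  assert (Pz : 0 < Cmod z) by (apply Cmod_gt_0; exact Hz).
  exists (Rmin (Cmod z / 2) (eps * (Cmod z * Cmod z * Cmod z) / 2)). split.
  { apply Rmin_glb_lt; [lra|]. apply Rdiv_lt_0_compat; [|lra].
    repeat apply Rmult_lt_0_compat; auto. }
  intros w Hw.
  assert (W1 : Cmod (w - z) < Cmod z / 2) by (eapply Rlt_le_trans; [exact Hw|apply Rmin_l]).
  assert (W2 : Cmod (w - z) < eps * (Cmod z * Cmod z * Cmod z) / 2)
    by (eapply Rlt_le_trans; [exact Hw|apply Rmin_r]).
  assert (Cw : Cmod z / 2 <= Cmod w).
  { assert (T := Cmod_triangle w (z - w)). replace (w + (z - w))%C with z in T by ring.
    rewrite Cmod_sub_sym in T. lra. }
  assert (Hw0 : w <> 0%C) by (intro E; subst; rewrite Cmod_0 in Cw; lra).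
  replace (/ w - / z - - / (z * z) * (w - z))%C with ((w - z) * (w - z) / (w * (z * z)))%C
    by (field; auto).
  rewrite Cmod_div by (repeat apply Cmult_neq_0; auto).
  rewrite !Cmod_mult.
  assert (0 <= Cmod (w - z)) by apply Cmod_ge_0.
  apply (Rmult_le_reg_r (Cmod w * (Cmod z * Cmod z))); [apply Rmult_lt_0_compat; nra|].
  replace (Cmod (w - z) * Cmod (w - z) / (Cmod w * (Cmod z * Cmod z)) * (Cmod w * (Cmod z * Cmod z)))
    with (Cmod (w - z) * Cmod (w - z)) by (field; split; lra).
  assert (Cmod (w - z) * Cmod (w - z) <= Cmod (w - z) * (eps * (Cmod z * Cmod z * Cmod z) / 2))
    by nra.
  assert (eps * (Cmod z * Cmod z * Cmod z) / 2 <= eps * (Cmod w * (Cmod z * Cmod z))).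
  { assert (0 < Cmod z * Cmod z) by nra. nra. }
  nra.
Qed.

Lemma is_Cderive_local_lipschitz f z l : is_Cderive f z l ->
  exists d, 0 < d /\ forall w, Cmod (w - z) < d -> Cmod (f w - f z) <= (Cmod l + 1) * Cmod (w - z).
Proof.
  intros H. destruct (proj1 (is_Cderive_eps f z l) H 1 Rlt_0_1) as [d [Hd H1]].
  exists d. split; [exact Hd|]. intros w Hw. specialize (H1 w Hw).
  replace (f w - f z)%C with ((f w - f z - l * (w - z)) + l * (w - z))%C by ring.
  eapply Rle_trans; [apply Cmod_triangle|]. rewrite Cmod_mult. lra.
Qed.

Definition Ccontinuous (f : C -> C) (z : C) : Prop :=
  forall eps, 0 < eps -> exists d, 0 < d /\ forall w, Cmod (w - z) < d -> Cmod (f w - f z) < eps.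

Lemma is_Cderive_continuous f z l : is_Cderive f z l -> Ccontinuous f z.
Proof.
  intros H eps Heps. destruct (is_Cderive_local_lipschitz f z l H) as [d [Hd H1]].
  assert (HK : 0 < Cmod l + 1) by (generalize (Cmod_ge_0 l); lra).
  exists (Rmin d (eps / (Cmod l + 1))). split.
  { apply Rmin_glb_lt; [exact Hd | apply Rdiv_lt_0_compat; lra]. }
  intros w Hw.
  assert (Hw2 : Cmod (w - z) < eps / (Cmod l + 1)) by (eapply Rlt_le_trans; [exact Hw|apply Rmin_r]).
  eapply Rle_lt_trans; [apply H1; eapply Rlt_le_trans; [exact Hw|apply Rmin_l]|].
  apply (Rmult_lt_compat_l (Cmod l + 1)) in Hw2; [|exact HK].
  replace ((Cmod l + 1) * (eps / (Cmod l + 1))) with eps in Hw2 by (field; lra). exact Hw2.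
Qed.

Lemma C_holo_at_continuous f z : C_holo_at f z -> Ccontinuous f z.
Proof. intros [l H]. exact (is_Cderive_continuous f z l H). Qed.

Lemma Ccontinuous_neq_0_near f z : Ccontinuous f z -> f z <> 0%C ->
  exists r, 0 < r /\ forall w, Cmod (w - z) < r -> f w <> 0%C.
Proof.
  intros H Hz. destruct (H (Cmod (f z))) as [r [Hr Hf]]; [apply Cmod_gt_0, Hz|].
  exists r. split; [exact Hr|]. intros w Hw E. specialize (Hf w Hw).
  rewrite E, Cmod_sub_sym, Cminus_0_r in Hf. lra.
Qed.

Lemma is_Cderive_diff_quot_limit f z l : is_Cderive f z l ->
  forall eps, 0 < eps -> exists d, 0 < d /\
    forall w, w <> z -> Cmod (w - z) < d -> Cmod ((f w - f z) / (w - z) - l) <= eps.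
Proof.
  intros H eps Heps. destruct (proj1 (is_Cderive_eps f z l) H eps Heps) as [d [Hd H1]].
  exists d. split; [exact Hd|]. intros w Hw Hwd.
  assert (Pw : 0 < Cmod (w - z)) by (apply Cmod_sub_pos, Hw).
  assert (Nw : (w - z)%C <> 0%C) by (apply Cmod_gt_0, Pw).
  replace ((f w - f z) / (w - z) - l)%C with ((f w - f z - l * (w - z)) / (w - z))%C by (field; exact Nw).
  rewrite Cmod_div by exact Nw.
  apply (Rmult_le_reg_r (Cmod (w - z))); [exact Pw|].
  unfold Rdiv. rewrite Rmult_assoc, Rinv_l, Rmult_1_r by lra. exact (H1 w Hwd).
Qed.

Lemma C_holo_at_ext f g z : (forall w, f w = g w) -> C_holo_at f z -> C_holo_at g z.
Proof. intros E [l H]. exists l. exact (is_derive_ext f g z l E H). Qed.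

Lemma C_holo_at_ext_loc f g z d : 0 < d ->
  (forall w, Cmod (w - z) < d -> f w = g w) -> C_holo_at f z -> C_holo_at g z.
Proof. intros Hd E [l H]. exists l. exact (is_Cderive_ext_loc f g z l d Hd E H). Qed.

Lemma C_holo_at_mult f g z : C_holo_at f z -> C_holo_at g z -> C_holo_at (fun w => f w * g w)%C z.
Proof. intros [lf Hf] [lg Hg]. eexists. exact (is_Cderive_mult f g z lf lg Hf Hg). Qed.

Lemma C_holo_at_comp f g z : C_holo_at f (g z) -> C_holo_at g z -> C_holo_at (fun w => f (g w)) z.
Proof. intros [lf Hf] [lg Hg]. eexists. exact (is_Cderive_comp f g z lf lg Hf Hg). Qed.

Lemma C_holo_at_id z : C_holo_at (fun w => w) z.
Proof. eexists. apply is_Cderive_id. Qed.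

Lemma C_holo_at_affine_inv (a w : C) : w <> 0%C -> C_holo_at (fun u => a + / u)%C w.
Proof.
  intros Hw. eexists. apply is_Cderive_plus; [apply is_Cderive_const | apply is_Cderive_inv, Hw].
Qed.

Lemma if_Ceq_dec_far (p w u v : C) (F : C -> C) : Cmod (u - w) < Cmod (w - p) ->
  (if Ceq_dec u p then v else F u) = F u.
Proof.
  intros H. destruct (Ceq_dec u p) as [E|E]; [|reflexivity].
  subst. rewrite Cmod_sub_sym in H. lra.
Qed.

Lemma Ccontinuous_Cmult_l f k z : Ccontinuous f z -> Ccontinuous (fun w => k * f w)%C z.
Proof.
  intros H eps Heps.
  assert (Hk : 0 < Cmod k + 1) by (generalize (Cmod_ge_0 k); lra).
  destruct (H (eps / (Cmod k + 1))) as [d [Hd H1]]; [apply Rdiv_lt_0_compat; lra|].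
  exists d. split; [exact Hd|]. intros w Hw.
  replace (k * f w - k * f z)%C with (k * (f w - f z))%C by ring. rewrite Cmod_mult.
  specialize (H1 w Hw).
  assert (Hq : 0 < eps / (Cmod k + 1)) by (apply Rdiv_lt_0_compat; lra).
  apply Rle_lt_trans with (Cmod k * (eps / (Cmod k + 1))).
  - apply Rmult_le_compat_l; [apply Cmod_ge_0 | lra].
  - replace (Cmod k * (eps / (Cmod k + 1))) with (eps - eps / (Cmod k + 1)) by (field; lra).
    lra.
Qed.

Lemma Cmod_sub_horizontal (x x0 y : R) : Cmod ((x, y) - (x0, y)) = Rabs (x - x0).
Proof. replace ((x, y) - (x0, y))%C with (RtoC (x - x0)) by Cring. apply Cmod_R. Qed.

Lemma Cmod_sub_vertical (x y y0 : R) : Cmod ((x, y) - (x, y0)) = Rabs (y - y0).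
Proof.
  replace ((x, y) - (x, y0))%C with (Ci * RtoC (y - y0))%C by Cring.
  rewrite Cmod_mult, Cmod_Ci, Cmod_R. ring.
Qed.

Lemma continuous_horizontal (f : C -> C) (x0 y : R) :
  Ccontinuous f (x0, y) -> @continuous R_UniformSpace C_R_NormedModule (fun x => f (x, y)) x0.
Proof.
  intros H.
  apply (proj2 (@filterlim_locally_ball_norm R_AbsRing _ C_R_NormedModule _ _ _ _)). intros eps.
  apply locally_R_ball. destruct (H eps (cond_pos eps)) as [d [Hd H1]].
  exists d. split; [exact Hd|]. intros x Hx. unfold ball_norm. rewrite norm_C_R_Cmod.
  apply H1. rewrite Cmod_sub_horizontal. exact Hx.
Qed.

Lemma continuous_vertical (f : C -> C) (x y0 : R) :
  Ccontinuous f (x, y0) -> @continuous R_UniformSpace C_R_NormedModule (fun y => f (x, y)) y0.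
Proof.
  intros H.
  apply (proj2 (@filterlim_locally_ball_norm R_AbsRing _ C_R_NormedModule _ _ _ _)). intros eps.
  apply locally_R_ball. destruct (H eps (cond_pos eps)) as [d [Hd H1]].
  exists d. split; [exact Hd|]. intros y Hy. unfold ball_norm. rewrite norm_C_R_Cmod.
  apply H1. rewrite Cmod_sub_vertical. exact Hy.
Qed.

Lemma is_derive_horizontal F x0 y l : is_Cderive F (x0, y) l ->
  @is_derive R_AbsRing C_R_NormedModule (fun x => F (x, y)) x0 l.
Proof.
  intros H. split; [apply is_linear_scal_l|].
  intros x Hx. apply (@is_filter_lim_locally_unique R_AbsRing R_NormedModule) in Hx. subst x.
  intros eps. apply locally_R_ball.
  destruct (proj1 (is_Cderive_eps F _ l) H eps (cond_pos eps)) as [d [Hd H1]].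
  exists d. split; [exact Hd|]. intros x Hx. rewrite <- (Cmod_sub_horizontal x x0 y) in Hx.
  specialize (H1 _ Hx). rewrite Cmod_sub_horizontal in H1. rewrite norm_C_R_Cmod.
  eapply Rle_trans; [apply Req_le, (f_equal Cmod)|]; [|exact H1].
  apply injective_projections; simpl; unfold scal, minus, plus, opp; simpl;
    unfold prod_plus, prod_opp, prod_scal; simpl; unfold mult, plus, opp; simpl; ring.
Qed.

Lemma is_derive_vertical F x y0 l : is_Cderive F (x, y0) l ->
  @is_derive R_AbsRing C_R_NormedModule (fun y => F (x, y)) y0 (Ci * l)%C.
Proof.
  intros H. split; [apply is_linear_scal_l|].
  intros y Hy. apply (@is_filter_lim_locally_unique R_AbsRing R_NormedModule) in Hy. subst y.
  intros eps. apply locally_R_ball.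
  destruct (proj1 (is_Cderive_eps F _ l) H eps (cond_pos eps)) as [d [Hd H1]].
  exists d. split; [exact Hd|]. intros y Hy. rewrite <- (Cmod_sub_vertical x y y0) in Hy.
  specialize (H1 _ Hy). rewrite Cmod_sub_vertical in H1. rewrite norm_C_R_Cmod.
  eapply Rle_trans; [apply Req_le, (f_equal Cmod)|]; [|exact H1].
  apply injective_projections; simpl; unfold scal, minus, plus, opp; simpl;
    unfold prod_plus, prod_opp, prod_scal; simpl; unfold mult, plus, opp; simpl; ring.
Qed.

(** * Complex-valued integrals over real segments *)

Definition CInt (f : R -> C) (a b : R) : C := @RInt C_R_CompleteNormedModule f a b.
Definition ex_CInt (f : R -> C) (a b : R) : Prop := @ex_RInt C_R_NormedModule f a b.

Lemma ex_CInt_continuous (f : R -> C) a b :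
  (forall x, Rmin a b <= x <= Rmax a b -> @continuous R_UniformSpace C_R_NormedModule f x) ->
  ex_CInt f a b.
Proof. exact (@ex_RInt_continuous C_R_CompleteNormedModule f a b). Qed.

Lemma ex_CInt_ext f g a b : (forall x, Rmin a b <= x <= Rmax a b -> f x = g x) ->
  ex_CInt f a b -> ex_CInt g a b.
Proof. intros H. apply (@ex_RInt_ext C_R_NormedModule). intros x Hx. apply H. lra. Qed.

Lemma CInt_ext f g a b : (forall x, Rmin a b <= x <= Rmax a b -> f x = g x) ->
  CInt f a b = CInt g a b.
Proof. intros H. apply (@RInt_ext C_R_CompleteNormedModule). intros x Hx. apply H. lra. Qed.

Lemma ex_CInt_plus f g a b : ex_CInt f a b -> ex_CInt g a b -> ex_CInt (fun x => f x + g x)%C a b.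
Proof. apply (@ex_RInt_plus C_R_NormedModule). Qed.

Lemma CInt_plus f g a b : ex_CInt f a b -> ex_CInt g a b ->
  CInt (fun x => f x + g x)%C a b = (CInt f a b + CInt g a b)%C.
Proof. apply (@RInt_plus C_R_CompleteNormedModule). Qed.

Lemma is_RInt_C (f : R -> C) a b (l : C) :
  @is_RInt C_R_NormedModule f a b l <->
  is_RInt (fun t => fst (f t)) a b (fst l) /\ is_RInt (fun t => snd (f t)) a b (snd l).
Proof.
  split.
  - intros H. split.
    + exact (@is_RInt_fct_extend_fst R_NormedModule R_NormedModule f a b l H).
    + exact (@is_RInt_fct_extend_snd R_NormedModule R_NormedModule f a b l H).
  - intros [H1 H2]. destruct l as [l1 l2].
    exact (@is_RInt_fct_extend_pair R_NormedModule R_NormedModule f a b l1 l2 H1 H2).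
Qed.

Lemma is_RInt_Cmult_l (f : R -> C) a b (l c : C) :
  @is_RInt C_R_NormedModule f a b l ->
  @is_RInt C_R_NormedModule (fun t => c * f t)%C a b (c * l)%C.
Proof.
  intros H. apply is_RInt_C in H. destruct H as [H1 H2]. apply is_RInt_C. simpl. split.
  - apply (@is_RInt_minus R_NormedModule).
    + exact (@is_RInt_scal R_NormedModule _ a b (fst c) _ H1).
    + exact (@is_RInt_scal R_NormedModule _ a b (snd c) _ H2).
  - apply (@is_RInt_plus R_NormedModule).
    + exact (@is_RInt_scal R_NormedModule _ a b (fst c) _ H2).
    + exact (@is_RInt_scal R_NormedModule _ a b (snd c) _ H1).
Qed.

Lemma ex_CInt_Cmult_l f a b c : ex_CInt f a b -> ex_CInt (fun t => c * f t)%C a b.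
Proof. intros [l H]. exists (c * l)%C. apply is_RInt_Cmult_l. exact H. Qed.

Lemma CInt_Cmult_l f a b c : ex_CInt f a b -> CInt (fun t => c * f t)%C a b = (c * CInt f a b)%C.
Proof.
  intros H. apply (@is_RInt_unique C_R_CompleteNormedModule).
  apply is_RInt_Cmult_l. exact (@RInt_correct C_R_CompleteNormedModule _ _ _ H).
Qed.

Lemma CInt_norm_le f a b M : a <= b -> ex_CInt f a b ->
  (forall x, a <= x <= b -> Cmod (f x) <= M) -> Cmod (CInt f a b) <= (b - a) * M.
Proof.
  intros Hab Hf HM. rewrite <- norm_C_R_Cmod.
  apply (@norm_RInt_le_const C_R_NormedModule f a b); [exact Hab | | ].
  - intros x Hx. rewrite norm_C_R_Cmod. auto.
  - exact (@RInt_correct C_R_CompleteNormedModule _ _ _ Hf).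
Qed.

Lemma CInt_Chasles f a b c : ex_CInt f a b -> ex_CInt f b c ->
  (CInt f a b + CInt f b c)%C = CInt f a c.
Proof. apply (@RInt_Chasles C_R_CompleteNormedModule). Qed.

Lemma CInt_fst f a b : ex_CInt f a b -> fst (CInt f a b) = RInt (fun t => fst (f t)) a b.
Proof.
  intros H. apply (@RInt_correct C_R_CompleteNormedModule), is_RInt_C in H.
  symmetry. apply is_RInt_unique. exact (proj1 H).
Qed.

Lemma CInt_snd f a b : ex_CInt f a b -> snd (CInt f a b) = RInt (fun t => snd (f t)) a b.
Proof.
  intros H. apply (@RInt_correct C_R_CompleteNormedModule), is_RInt_C in H.
  symmetry. apply is_RInt_unique. exact (proj2 H).
Qed.

Lemma CInt_bounded_continuous (h : R -> C) a b : a <= b ->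
  (forall x, a <= x <= b -> @continuous R_UniformSpace C_R_NormedModule h x) ->
  exists M, forall x, a <= x <= b -> Cmod (h x) <= M.
Proof.
  intros Hab H.
  destruct (@bounded_continuity R_AbsRing C_R_NormedModule h a b H) as [M HM].
  exists M. intros x Hx. rewrite <- norm_C_R_Cmod. left. apply HM. exact Hx.
Qed.

(** * Integrals along the boundary of a rectangle *)

(* The contour integral of [f] along the positively oriented boundary of [[a, b] x [c, d]]. *)
Definition rect_int (f : C -> C) (a b c d : R) : C :=
  (CInt (fun x => f (x, c)) a b + Ci * CInt (fun y => f (b, y)) c d
   - CInt (fun x => f (x, d)) a b - Ci * CInt (fun y => f (a, y)) c d)%C.

Definition ex_rect_int (f : C -> C) (a b c d : R) : Prop :=
  ex_CInt (fun x => f (x, c)) a b /\ ex_CInt (fun y => f (b, y)) c d /\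
  ex_CInt (fun x => f (x, d)) a b /\ ex_CInt (fun y => f (a, y)) c d.

Definition in_rect (a b c d : R) (z : C) : Prop := a <= fst z <= b /\ c <= snd z <= d.

Definition on_rect_bd (a b c d : R) (z : C) : Prop :=
  (a <= fst z <= b /\ (snd z = c \/ snd z = d)) \/
  (c <= snd z <= d /\ (fst z = a \/ fst z = b)).

Lemma on_rect_bd_in_rect a b c d z : a <= b -> c <= d -> on_rect_bd a b c d z -> in_rect a b c d z.
Proof. unfold on_rect_bd, in_rect. intros; destruct H1 as [[? [E|E]]|[? [E|E]]]; lra. Qed.

Lemma ex_rect_int_continuous f a b c d : a <= b -> c <= d ->
  (forall z, on_rect_bd a b c d z -> Ccontinuous f z) -> ex_rect_int f a b c d.
Proof.
  intros Hab Hcd H.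
  assert (Hh : forall y, (y = c \/ y = d) -> ex_CInt (fun x => f (x, y)) a b).
  { intros y Hy. apply ex_CInt_continuous. intros x Hx. apply continuous_horizontal, H.
    rewrite Rmin_left, Rmax_right in Hx by exact Hab. left; simpl; auto. }
  assert (Hv : forall x, (x = a \/ x = b) -> ex_CInt (fun y => f (x, y)) c d).
  { intros x Hx. apply ex_CInt_continuous. intros y Hy. apply continuous_vertical, H.
    rewrite Rmin_left, Rmax_right in Hy by exact Hcd. right; simpl; auto. }
  repeat split; auto.
Qed.

Lemma ex_rect_int_ext f g a b c d : a <= b -> c <= d ->
  (forall z, on_rect_bd a b c d z -> f z = g z) -> ex_rect_int f a b c d -> ex_rect_int g a b c d.
Proof.
  intros Hab Hcd H [F1 [F2 [F3 F4]]].
  refine (conj (ex_CInt_ext _ _ _ _ _ F1) (conj (ex_CInt_ext _ _ _ _ _ F2)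
    (conj (ex_CInt_ext _ _ _ _ _ F3) (ex_CInt_ext _ _ _ _ _ F4))));
  intros t Ht; rewrite ?Rmin_left, ?Rmax_right in Ht by auto; apply H; unfold on_rect_bd; simpl; tauto.
Qed.

Lemma rect_int_ext f g a b c d : a <= b -> c <= d ->
  (forall z, on_rect_bd a b c d z -> f z = g z) -> rect_int f a b c d = rect_int g a b c d.
Proof.
  intros Hab Hcd H. unfold rect_int.
  rewrite (CInt_ext (fun x => f (x, c)) (fun x => g (x, c))),
          (CInt_ext (fun x => f (x, d)) (fun x => g (x, d))),
          (CInt_ext (fun y => f (b, y)) (fun y => g (b, y))),
          (CInt_ext (fun y => f (a, y)) (fun y => g (a, y))); auto;
  intros t Ht; rewrite ?Rmin_left, ?Rmax_right in Ht by auto; apply H; unfold on_rect_bd; simpl; tauto.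
Qed.

Lemma ex_rect_int_plus f g a b c d : ex_rect_int f a b c d -> ex_rect_int g a b c d ->
  ex_rect_int (fun z => f z + g z)%C a b c d.
Proof. intros [F1 [F2 [F3 F4]]] [G1 [G2 [G3 G4]]]. repeat split; apply ex_CInt_plus; auto. Qed.

Lemma ex_rect_int_Cmult_l f k a b c d : ex_rect_int f a b c d ->
  ex_rect_int (fun z => k * f z)%C a b c d.
Proof. intros [F1 [F2 [F3 F4]]]. repeat split; apply ex_CInt_Cmult_l; auto. Qed.

Lemma rect_int_plus f g a b c d : ex_rect_int f a b c d -> ex_rect_int g a b c d ->
  rect_int (fun z => f z + g z)%C a b c d = (rect_int f a b c d + rect_int g a b c d)%C.
Proof.
  intros [F1 [F2 [F3 F4]]] [G1 [G2 [G3 G4]]]. unfold rect_int.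
  rewrite !(CInt_plus (fun x => f (x, _)) (fun x => g (x, _))) by auto.
  rewrite !(CInt_plus (fun y => f (_, y)) (fun y => g (_, y))) by auto.
  ring.
Qed.

Lemma rect_int_Cmult_l f k a b c d : ex_rect_int f a b c d ->
  rect_int (fun z => k * f z)%C a b c d = (k * rect_int f a b c d)%C.
Proof.
  intros [F1 [F2 [F3 F4]]]. unfold rect_int.
  rewrite !(CInt_Cmult_l (fun x => f (x, _))) by auto.
  rewrite !(CInt_Cmult_l (fun y => f (_, y))) by auto.
  ring.
Qed.

Lemma rect_int_linear3 f g h k a b c d : a <= b -> c <= d ->
  ex_rect_int f a b c d -> ex_rect_int g a b c d -> ex_rect_int h a b c d ->
  rect_int (fun z => f z - g z - k * h z)%C a b c d =
  (rect_int f a b c d - rect_int g a b c d - k * rect_int h a b c d)%C.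
Proof.
  intros Hab Hcd Sf Sg Sh.
  rewrite (rect_int_ext _ (fun z => (f z + (-1) * g z) + (- k) * h z)%C) by (auto; intros; ring).
  rewrite rect_int_plus, rect_int_plus, !rect_int_Cmult_l;
    auto using ex_rect_int_plus, ex_rect_int_Cmult_l.
  ring.
Qed.

Lemma rect_int_split_x f a e b c d :
  ex_CInt (fun x => f (x, c)) a e -> ex_CInt (fun x => f (x, c)) e b ->
  ex_CInt (fun x => f (x, d)) a e -> ex_CInt (fun x => f (x, d)) e b ->
  rect_int f a b c d = (rect_int f a e c d + rect_int f e b c d)%C.
Proof.
  intros H1 H2 H3 H4. unfold rect_int.
  rewrite <- (CInt_Chasles _ a e b H1 H2), <- (CInt_Chasles _ a e b H3 H4). ring.
Qed.

Lemma rect_int_split_y f a b c e d :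
  ex_CInt (fun y => f (b, y)) c e -> ex_CInt (fun y => f (b, y)) e d ->
  ex_CInt (fun y => f (a, y)) c e -> ex_CInt (fun y => f (a, y)) e d ->
  rect_int f a b c d = (rect_int f a b c e + rect_int f a b e d)%C.
Proof.
  intros H1 H2 H3 H4. unfold rect_int.
  rewrite <- (CInt_Chasles _ c e d H1 H2), <- (CInt_Chasles _ c e d H3 H4). ring.
Qed.

Lemma rect_int_norm_le f a b c d M : a <= b -> c <= d -> ex_rect_int f a b c d ->
  (forall z, on_rect_bd a b c d z -> Cmod (f z) <= M) ->
  Cmod (rect_int f a b c d) <= 2 * ((b - a) + (d - c)) * M.
Proof.
  intros Hab Hcd [F1 [F2 [F3 F4]]] H. unfold rect_int.
  assert (B1 : Cmod (CInt (fun x => f (x, c)) a b) <= (b - a) * M).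
  { apply CInt_norm_le; auto. intros x Hx. apply H. unfold on_rect_bd; simpl; tauto. }
  assert (B2 : Cmod (CInt (fun y => f (b, y)) c d) <= (d - c) * M).
  { apply CInt_norm_le; auto. intros x Hx. apply H. unfold on_rect_bd; simpl; tauto. }
  assert (B3 : Cmod (CInt (fun x => f (x, d)) a b) <= (b - a) * M).
  { apply CInt_norm_le; auto. intros x Hx. apply H. unfold on_rect_bd; simpl; tauto. }
  assert (B4 : Cmod (CInt (fun y => f (a, y)) c d) <= (d - c) * M).
  { apply CInt_norm_le; auto. intros x Hx. apply H. unfold on_rect_bd; simpl; tauto. }
  assert (Tm : forall u v : C, Cmod (u - v) <= Cmod u + Cmod v).
  { intros u v. eapply Rle_trans; [apply Cmod_triangle|]. rewrite Cmod_opp. lra. }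
  assert (Ti : forall u : C, Cmod (Ci * u) = Cmod u) by (intros u; rewrite Cmod_mult, Cmod_Ci; ring).
  eapply Rle_trans; [apply Tm|]. rewrite Ti.
  eapply Rle_trans; [apply Rplus_le_compat_r, Tm|].
  eapply Rle_trans; [apply Rplus_le_compat_r, Rplus_le_compat_r, Cmod_triangle|].
  rewrite Ti. lra.
Qed.

Lemma rect_int_bounded f a b c d : a <= b -> c <= d ->
  (forall z, on_rect_bd a b c d z -> Ccontinuous f z) ->
  exists B, 0 <= B /\ forall z, on_rect_bd a b c d z -> Cmod (f z) <= B.
Proof.
  intros Hab Hcd H.
  assert (Hh : forall y, (y = c \/ y = d) ->
            exists M, forall x, a <= x <= b -> Cmod (f (x, y)) <= M).
  { intros y Hy. apply CInt_bounded_continuous; [exact Hab|].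
    intros x Hx. apply continuous_horizontal, H. left; simpl; auto. }
  assert (Hv : forall x, (x = a \/ x = b) ->
            exists M, forall y, c <= y <= d -> Cmod (f (x, y)) <= M).
  { intros x Hx. apply CInt_bounded_continuous; [exact Hcd|].
    intros y Hy. apply continuous_vertical, H. right; simpl; auto. }
  destruct (Hh c (or_introl eq_refl)) as [M1 H1], (Hh d (or_intror eq_refl)) as [M2 H2].
  destruct (Hv a (or_introl eq_refl)) as [M3 H3], (Hv b (or_intror eq_refl)) as [M4 H4].
  set (B := Rmax 0 (Rmax (Rmax M1 M2) (Rmax M3 M4))).
  assert (LB : forall M, M <= Rmax (Rmax M1 M2) (Rmax M3 M4) -> M <= B)
    by (intros M HM; eapply Rle_trans; [exact HM | apply Rmax_r]).
  assert (L1 : M1 <= B) by (apply LB; eapply Rle_trans; [apply Rmax_l | apply Rmax_l]).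
  assert (L2 : M2 <= B) by (apply LB; eapply Rle_trans; [apply Rmax_r | apply Rmax_l]).
  assert (L3 : M3 <= B) by (apply LB; eapply Rle_trans; [apply Rmax_l | apply Rmax_r]).
  assert (L4 : M4 <= B) by (apply LB; eapply Rle_trans; [apply Rmax_r | apply Rmax_r]).
  exists B. split; [apply Rmax_l|].
  intros [x y] Hz. unfold on_rect_bd in Hz; simpl in Hz.
  destruct Hz as [[Hx [E|E]]|[Hy [E|E]]]; subst.
  - eapply Rle_trans; [apply H1; auto | exact L1].
  - eapply Rle_trans; [apply H2; auto | exact L2].
  - eapply Rle_trans; [apply H3; auto | exact L3].
  - eapply Rle_trans; [apply H4; auto | exact L4].
Qed.

Lemma ex_rect_int_linear3 f g h k a b c d : a <= b -> c <= d ->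
  ex_rect_int f a b c d -> ex_rect_int g a b c d -> ex_rect_int h a b c d ->
  ex_rect_int (fun z => f z - g z - k * h z)%C a b c d.
Proof.
  intros Hab Hcd Sf Sg Sh.
  apply (ex_rect_int_ext (fun z => (f z + (-1) * g z) + (- k) * h z)%C); auto; [intros; ring|].
  auto using ex_rect_int_plus, ex_rect_int_Cmult_l.
Qed.

(** * Goursat's lemma for rectangles *)

Lemma nested_intervals (u v : nat -> R) :
  Un_growing u -> Un_decreasing v -> (forall n, u n <= v n) ->
  exists x, forall n, u n <= x <= v n.
Proof.
  intros Hu Hv Huv.
  destruct (completeness (fun x => exists n, x = u n)) as [x [Hub Hlub]].
  { exists (v 0%nat). intros y [n ->].
    apply Rle_trans with (v n); [apply Huv | apply decreasing_prop; [exact Hv | lia]]. }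
  { exists (u 0%nat), 0%nat. reflexivity. }
  exists x. intros n. split; [apply Hub; exists n; reflexivity|].
  apply Hlub. intros y [k ->].
  apply Rle_trans with (u (max k n)); [apply Rge_le, growing_prop; [exact Hu | lia]|].
  apply Rle_trans with (v (max k n)); [apply Huv | apply decreasing_prop; [exact Hv | lia]].
Qed.

Lemma exists_div_pow2_lt (L e : R) : 0 <= L -> 0 < e -> exists n, L / 2 ^ n < e.
Proof.
  intros HL He.
  destruct (pow_lt_1_zero (/ 2)) with (y := e / (L + 1)) as [N HN].
  { rewrite Rabs_pos_eq; lra. }
  { apply Rdiv_lt_0_compat; lra. }
  exists N. specialize (HN N (Nat.le_refl N)).
  rewrite Rabs_pos_eq in HN by (apply pow_le; lra).
  rewrite pow_inv in HN.
  assert (0 < / 2 ^ N) by (apply Rinv_0_lt_compat, pow_lt; lra).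
  apply (Rmult_lt_compat_l (L + 1)) in HN; [|lra].
  replace ((L + 1) * (e / (L + 1))) with e in HN by (field; lra).
  unfold Rdiv. nra.
Qed.

Lemma in_rect_Cmod_sub_le a b c d z w : in_rect a b c d z -> in_rect a b c d w ->
  Cmod (z - w) <= (b - a) + (d - c).
Proof.
  intros [Zx Zy] [Wx Wy]. eapply Rle_trans; [apply Cmod_le_abs_sum|]. simpl.
  assert (Rabs (fst z + - fst w) <= b - a) by (apply Rabs_le; lra).
  assert (Rabs (snd z + - snd w) <= d - c) by (apply Rabs_le; lra).
  lra.
Qed.

Lemma rect_int_exact (F F' : C -> C) a b c d : a <= b -> c <= d ->
  (forall z, in_rect a b c d z -> is_Cderive F z (F' z)) ->
  (forall z, in_rect a b c d z -> Ccontinuous F' z) -> rect_int F' a b c d = 0%C.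
Proof.
  intros Hab Hcd HD HC.
  assert (Hh : forall y, c <= y <= d ->
    CInt (fun x => F' (x, y)) a b = (F (b, y) - F (a, y))%C).
  { intros y Hy. apply (@is_RInt_unique C_R_CompleteNormedModule).
    apply (@is_RInt_derive C_R_CompleteNormedModule (fun x => F (x, y)));
      intros x Hx; rewrite Rmin_left, Rmax_right in Hx by exact Hab.
    - apply is_derive_horizontal, HD. split; simpl; lra.
    - apply continuous_horizontal, HC. split; simpl; lra. }
  assert (Hv : forall x, a <= x <= b ->
    (Ci * CInt (fun y => F' (x, y)) c d)%C = (F (x, d) - F (x, c))%C).
  { intros x Hx. rewrite <- CInt_Cmult_l.
    2: { apply ex_CInt_continuous. intros y Hy. apply continuous_vertical, HC.
         rewrite Rmin_left, Rmax_right in Hy by exact Hcd. split; simpl; lra. }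
    apply (@is_RInt_unique C_R_CompleteNormedModule).
    apply (@is_RInt_derive C_R_CompleteNormedModule (fun y => F (x, y)));
      intros y Hy; rewrite Rmin_left, Rmax_right in Hy by exact Hcd.
    - apply is_derive_vertical, HD. split; simpl; lra.
    - apply (continuous_vertical (fun z => Ci * F' z)%C), Ccontinuous_Cmult_l, HC.
      split; simpl; lra. }
  unfold rect_int. rewrite !Hh, !Hv by lra. ring.
Qed.

Lemma rect_int_affine (p q : C) a b c d : a <= b -> c <= d ->
  rect_int (fun w => p + q * w)%C a b c d = 0%C.
Proof.
  intros Hab Hcd.
  set (h := (fst q / 2, snd q / 2) : C).
  assert (Hh : (h + h)%C = q) by (apply injective_projections; unfold h; simpl; field).
  apply (rect_int_exact (fun w => p * w + h * (w * w))%C); [exact Hab | exact Hcd | |].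
  - intros z _.
    replace (p + q * z)%C with ((0 * z + p * 1) + (0 * (z * z) + h * (1 * z + z * 1)))%C
      by (rewrite <- Hh; ring).
    apply is_Cderive_plus.
    + apply (is_Cderive_mult (fun _ => p) (fun w => w)); auto using is_Cderive_const, is_Cderive_id.
    + apply (is_Cderive_mult (fun _ => h) (fun w => w * w)%C); [apply is_Cderive_const|].
      apply (is_Cderive_mult (fun w => w) (fun w => w)); apply is_Cderive_id.
  - intros z _.
    apply (is_Cderive_continuous _ z (0 + (0 * z + q * 1))%C).
    apply is_Cderive_plus; [apply is_Cderive_const|].
    apply is_Cderive_mult; [apply is_Cderive_const | apply is_Cderive_id].
Qed.

(* If [f] is within [eps |z - zs|] of its tangent at [zs], its integral is
   [O(eps)] times the squared size, since the tangent integrates to zero. *)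
Lemma rect_int_tangent_bound f a b c d zs l eps : a <= b -> c <= d -> 0 <= eps ->
  in_rect a b c d zs -> (forall z, in_rect a b c d z -> Ccontinuous f z) ->
  (forall z, in_rect a b c d z -> Cmod (f z - f zs - l * (z - zs)) <= eps * Cmod (z - zs)) ->
  Cmod (rect_int f a b c d) <= 2 * eps * ((b - a) + (d - c)) ^ 2.
Proof.
  intros Hab Hcd Heps Hzs Hc Hl.
  set (L := (b - a) + (d - c)).
  set (T := fun w => ((f zs - l * zs) + l * w)%C).
  assert (HT : forall z, Ccontinuous T z).
  { intros z. apply (is_Cderive_continuous _ z (0 + (0 * z + l * 1))%C).
    apply is_Cderive_plus; [apply is_Cderive_const|].
    apply is_Cderive_mult; [apply is_Cderive_const | apply is_Cderive_id]. }
  assert (Hcont : forall z, on_rect_bd a b c d z -> Ccontinuous f z)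
    by (intros z Hz; apply Hc, on_rect_bd_in_rect; auto).
  assert (Sf : ex_rect_int f a b c d) by (apply ex_rect_int_continuous; auto).
  assert (ST : ex_rect_int T a b c d) by (apply ex_rect_int_continuous; auto).
  assert (Sm : ex_rect_int (fun z => (-1) * T z)%C a b c d) by (apply ex_rect_int_Cmult_l; auto).
  assert (Split : rect_int f a b c d = rect_int (fun z => f z + (-1) * T z)%C a b c d).
  { rewrite rect_int_plus, rect_int_Cmult_l by auto. unfold T.
    rewrite rect_int_affine by auto. ring. }
  rewrite Split.
  replace (2 * eps * L ^ 2) with (2 * L * (eps * L)) by ring.
  apply rect_int_norm_le; auto using ex_rect_int_plus.
  intros z Hz. assert (Hzr := on_rect_bd_in_rect a b c d z Hab Hcd Hz).
  replace (f z + -1 * T z)%C with (f z - f zs - l * (z - zs))%C by (unfold T; ring).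
  eapply Rle_trans; [apply Hl, Hzr|]. apply Rmult_le_compat_l; [exact Heps|].
  apply in_rect_Cmod_sub_le; assumption.
Qed.

Lemma rect_int_quadrisect f a b c d : a <= b -> c <= d ->
  (forall z, in_rect a b c d z -> Ccontinuous f z) ->
  rect_int f a b c d =
  (rect_int f a ((a+b)/2) c ((c+d)/2) + rect_int f ((a+b)/2) b c ((c+d)/2) +
   rect_int f a ((a+b)/2) ((c+d)/2) d + rect_int f ((a+b)/2) b ((c+d)/2) d)%C.
Proof.
  intros Hab Hcd H.
  set (m := (a+b)/2). set (k := (c+d)/2).
  assert (EH : forall y u v, c <= y <= d -> a <= u <= v -> v <= b -> ex_CInt (fun x => f (x, y)) u v).
  { intros y u v Hy Hu Hv. apply ex_CInt_continuous. intros x Hx.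
    rewrite Rmin_left, Rmax_right in Hx by lra. apply continuous_horizontal, H. split; simpl; lra. }
  assert (EV : forall x u v, a <= x <= b -> c <= u <= v -> v <= d -> ex_CInt (fun y => f (x, y)) u v).
  { intros x u v Hx Hu Hv. apply ex_CInt_continuous. intros y Hy.
    rewrite Rmin_left, Rmax_right in Hy by lra. apply continuous_vertical, H. split; simpl; lra. }
  rewrite (rect_int_split_x f a m b c d) by (apply EH; unfold m, k; lra).
  rewrite (rect_int_split_y f a m c k d) by (apply EV; unfold m, k; lra).
  rewrite (rect_int_split_y f m b c k d) by (apply EV; unfold m, k; lra).
  ring.
Qed.

Record rect := Rect { r_a : R; r_b : R; r_c : R; r_d : R }.

Definition rect_int_r f (r : rect) := rect_int f (r_a r) (r_b r) (r_c r) (r_d r).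

Definition quarter1 r := Rect (r_a r) ((r_a r + r_b r)/2) (r_c r) ((r_c r + r_d r)/2).
Definition quarter2 r := Rect ((r_a r + r_b r)/2) (r_b r) (r_c r) ((r_c r + r_d r)/2).
Definition quarter3 r := Rect (r_a r) ((r_a r + r_b r)/2) ((r_c r + r_d r)/2) (r_d r).
Definition quarter4 r := Rect ((r_a r + r_b r)/2) (r_b r) ((r_c r + r_d r)/2) (r_d r).

(* A quarter carrying at least a fourth of the integral; one exists by [rect_int_quadrisect]. *)
Definition goursat_step f r : rect :=
  if Rle_dec (Cmod (rect_int_r f r) / 4) (Cmod (rect_int_r f (quarter1 r))) then quarter1 r else
  if Rle_dec (Cmod (rect_int_r f r) / 4) (Cmod (rect_int_r f (quarter2 r))) then quarter2 r else
  if Rle_dec (Cmod (rect_int_r f r) / 4) (Cmod (rect_int_r f (quarter3 r))) then quarter3 r else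
  quarter4 r.

Lemma goursat_step_spec f r : r_a r <= r_b r -> r_c r <= r_d r ->
  (forall z, in_rect (r_a r) (r_b r) (r_c r) (r_d r) z -> Ccontinuous f z) ->
  let r' := goursat_step f r in
  Cmod (rect_int_r f r) / 4 <= Cmod (rect_int_r f r') /\
  r_a r <= r_a r' /\ r_b r' <= r_b r /\ r_c r <= r_c r' /\ r_d r' <= r_d r /\
  r_b r' - r_a r' = (r_b r - r_a r) / 2 /\ r_d r' - r_c r' = (r_d r - r_c r) / 2.
Proof.
  intros Hab Hcd H r'. subst r'.
  assert (Q := rect_int_quadrisect f _ _ _ _ Hab Hcd H).
  unfold goursat_step.
  destruct (Rle_dec _ _) as [H1|H1]; [unfold quarter1; simpl; repeat split; auto; lra|].
  destruct (Rle_dec _ _) as [H2|H2]; [unfold quarter2; simpl; repeat split; auto; lra|].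
  destruct (Rle_dec _ _) as [H3|H3]; [unfold quarter3; simpl; repeat split; auto; lra|].
  unfold quarter4; simpl. repeat split; try lra.
  apply Rnot_le_lt in H1, H2, H3.
  unfold rect_int_r, quarter1, quarter2, quarter3 in *; simpl in *.
  rewrite Q in H1, H2, H3 |- *.
  set (A1 := rect_int f (r_a r) ((r_a r + r_b r) / 2) (r_c r) ((r_c r + r_d r) / 2)) in *.
  set (A2 := rect_int f ((r_a r + r_b r) / 2) (r_b r) (r_c r) ((r_c r + r_d r) / 2)) in *.
  set (A3 := rect_int f (r_a r) ((r_a r + r_b r) / 2) ((r_c r + r_d r) / 2) (r_d r)) in *.
  set (A4 := rect_int f ((r_a r + r_b r) / 2) (r_b r) ((r_c r + r_d r) / 2) (r_d r)) in *.
  generalize (Cmod_triangle (A1 + A2 + A3) A4) (Cmod_triangle (A1 + A2) A3) (Cmod_triangle A1 A2).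
  lra.
Qed.

Section Goursat.

Variable f : C -> C.
Variables a b c d : R.
Hypothesis Hab : a <= b.
Hypothesis Hcd : c <= d.
Hypothesis Hf : forall z, in_rect a b c d z -> C_holo_at f z.

Let nest (n : nat) : rect := Nat.iter n (goursat_step f) (Rect a b c d).

Let nest_inv (n : nat) : Prop :=
  a <= r_a (nest n) <= r_b (nest n) /\ r_b (nest n) <= b /\
  c <= r_c (nest n) <= r_d (nest n) /\ r_d (nest n) <= d /\
  r_b (nest n) - r_a (nest n) = (b - a) / 2 ^ n /\ r_d (nest n) - r_c (nest n) = (d - c) / 2 ^ n /\
  Cmod (rect_int f a b c d) / 4 ^ n <= Cmod (rect_int_r f (nest n)).

Let nest_step n : nest_inv n ->
  nest_inv (S n) /\ r_a (nest n) <= r_a (nest (S n)) /\ r_b (nest (S n)) <= r_b (nest n) /\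
  r_c (nest n) <= r_c (nest (S n)) /\ r_d (nest (S n)) <= r_d (nest n).
Proof.
  intros [I1 [I2 [I3 [I4 [I5 [I6 I7]]]]]].
  assert (Hc : forall z, in_rect (r_a (nest n)) (r_b (nest n)) (r_c (nest n)) (r_d (nest n)) z ->
                 Ccontinuous f z).
  { intros z [Zx Zy]. apply C_holo_at_continuous, Hf. split; lra. }
  destruct (goursat_step_spec f (nest n) ltac:(lra) ltac:(lra) Hc) as [P1 [P2 [P3 [P4 [P5 [P6 P7]]]]]].
  change (nest (S n)) with (goursat_step f (nest n)).
  assert (0 < 2 ^ n) by (apply pow_lt; lra).
  assert (0 < 4 ^ n) by (apply pow_lt; lra).
  unfold nest_inv. change (nest (S n)) with (goursat_step f (nest n)).
  repeat split; try lra.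
  - rewrite P6, I5. simpl. field. lra.
  - rewrite P7, I6. simpl. field. lra.
  - simpl. apply Rle_trans with (Cmod (rect_int_r f (nest n)) / 4); [|exact P1].
    replace (Cmod (rect_int f a b c d) / (4 * 4 ^ n))
      with ((Cmod (rect_int f a b c d) / 4 ^ n) / 4) by (field; lra).
    lra.
Qed.

Let nest_spec n : nest_inv n.
Proof.
  induction n as [|n IH].
  - unfold nest_inv, rect_int_r. simpl. repeat split; lra.
  - exact (proj1 (nest_step n IH)).
Qed.

Let nest_point : exists zs, in_rect a b c d zs /\
  forall n, in_rect (r_a (nest n)) (r_b (nest n)) (r_c (nest n)) (r_d (nest n)) zs.
Proof.
  assert (Mono := fun n => proj2 (nest_step n (nest_spec n))).
  destruct (nested_intervals (fun n => r_a (nest n)) (fun n => r_b (nest n))) as [xs Hxs];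
    [intros n; generalize (Mono n); tauto .. | intros n; apply (nest_spec n) |].
  destruct (nested_intervals (fun n => r_c (nest n)) (fun n => r_d (nest n))) as [ys Hys];
    [intros n; generalize (Mono n); tauto .. | intros n; apply (nest_spec n) |].
  exists (xs, ys). split; [|intros n; split; simpl; auto].
  specialize (Hxs 0%nat). specialize (Hys 0%nat). split; simpl in *; lra.
Qed.

(* The integral over the [n]-th rectangle is at least [|I| / 4^n] and, by the tangent
   bound at the common point, at most [eps (L / 2^n)^2] for every [eps]. *)
Theorem goursat : rect_int f a b c d = 0%C.
Proof.
  destruct (Req_dec (Cmod (rect_int f a b c d)) 0) as [E|E]; [apply Cmod_eq_0, E|].
  exfalso.
  set (alpha := Cmod (rect_int f a b c d)).
  assert (Halpha : 0 < alpha) by (generalize (Cmod_ge_0 (rect_int f a b c d)); unfold alpha; lra).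
  destruct nest_point as [zs [Hzs Hin]].
  destruct (Hf zs Hzs) as [l Hl].
  set (L := (b - a) + (d - c)).
  set (eps := alpha / (2 * L ^ 2 + 1)).
  assert (HL2 : 0 <= L ^ 2) by apply pow2_ge_0.
  assert (Heps : 0 < eps) by (unfold eps; apply Rdiv_lt_0_compat; lra).
  destruct (proj1 (is_Cderive_eps f zs l) Hl eps Heps) as [del [Hdel Hl2]].
  destruct (exists_div_pow2_lt L del) as [n Hn]; [unfold L; lra | exact Hdel|].
  destruct (nest_spec n) as [I1 [I2 [I3 [I4 [I5 [I6 I7]]]]]].
  assert (P2 : 0 < 2 ^ n) by (apply pow_lt; lra).
  assert (Ln : (r_b (nest n) - r_a (nest n)) + (r_d (nest n) - r_c (nest n)) = L / 2 ^ n)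
    by (rewrite I5, I6; unfold L; field; lra).
  assert (Up : Cmod (rect_int_r f (nest n)) <= 2 * eps * (L / 2 ^ n) ^ 2).
  { rewrite <- Ln. unfold rect_int_r.
    apply (rect_int_tangent_bound f (r_a (nest n)) (r_b (nest n)) (r_c (nest n)) (r_d (nest n)) zs l eps);
      [lra | lra | lra | apply Hin | |].
    - intros z [Zx Zy]. apply C_holo_at_continuous, Hf. split; lra.
    - intros z Hz. apply Hl2. rewrite <- Ln in Hn.
      eapply Rle_lt_trans; [apply in_rect_Cmod_sub_le; [exact Hz | apply Hin] | exact Hn]. }
  assert (P4 : 4 ^ n = (2 ^ n) ^ 2) by (rewrite <- pow_mult, Nat.mul_comm, pow_mult; f_equal; lra).
  assert (Hsmall : 2 * eps * L ^ 2 < alpha).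
  { unfold eps.
    replace (2 * (alpha / (2 * L ^ 2 + 1)) * L ^ 2) with (alpha - alpha / (2 * L ^ 2 + 1))
      by (field; lra).
    assert (0 < alpha / (2 * L ^ 2 + 1)) by (apply Rdiv_lt_0_compat; lra).
    lra. }
  assert (alpha <= 2 * eps * L ^ 2); [|lra].
  apply (Rmult_le_reg_r (/ 4 ^ n)); [apply Rinv_0_lt_compat, pow_lt; lra|].
  eapply Rle_trans; [exact I7|]. eapply Rle_trans; [exact Up|]. right. rewrite P4. field. lra.
Qed.

End Goursat.

(** * The removable singularity theorem *)

Lemma C_holo_at_div_sub phi z u : C_holo_at phi z -> z <> u ->
  C_holo_at (fun w => phi w / (w - u))%C z.
Proof.
  intros [l H] Hzu. eexists. apply is_Cderive_mult; [exact H|].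
  apply (is_Cderive_comp (fun w => / w)%C (fun w => w - u)%C).
  - apply is_Cderive_inv. intro E. apply Hzu. replace z with ((z - u) + u)%C by ring. rewrite E. ring.
  - apply is_Cderive_minus; [apply is_Cderive_id | apply is_Cderive_const].
Qed.

Lemma ex_rect_int_holo g a b c d : a <= b -> c <= d ->
  (forall z, on_rect_bd a b c d z -> C_holo_at g z) -> ex_rect_int g a b c d.
Proof.
  intros Hab Hcd H. apply ex_rect_int_continuous; auto.
  intros z Hz. apply C_holo_at_continuous, H, Hz.
Qed.

(* [diff_quot f u] is given the junk value [0] at [u]: a single point does not
   affect boundary integrals of rectangles whose sides avoid [u]. *)
Definition diff_quot (f : C -> C) (u : C) : C -> C :=
  fun w => if Ceq_dec w u then 0%C else ((f w - f u) / (w - u))%C.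

Lemma C_holo_at_diff_quot f u z : C_holo_at f z -> z <> u -> C_holo_at (diff_quot f u) z.
Proof.
  intros [l H] Hzu.
  destruct (C_holo_at_div_sub (fun w => f w - f u)%C z u) as [l' H']; [|exact Hzu|].
  { eexists. apply is_Cderive_minus; [exact H | apply is_Cderive_const]. }
  exists l'. apply (is_Cderive_ext_loc (fun w => (f w - f u) / (w - u))%C _ z l' (Cmod (z - u)));
    [apply Cmod_sub_pos, Hzu | | exact H'].
  intros w Hw. unfold diff_quot. destruct (Ceq_dec w u) as [E|E]; [|reflexivity].
  subst w. rewrite Cmod_sub_sym in Hw. lra.
Qed.

Lemma C_eq_0_of_small (x : C) (K r : R) : 0 < r ->
  (forall e, 0 < e < r -> Cmod x <= K * e) -> x = 0%C.
Proof.
  intros Hr H. apply Cmod_eq_0.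
  destruct (Rle_or_lt (Cmod x) 0) as [X|X]; [generalize (Cmod_ge_0 x); lra|]. exfalso.
  assert (HK : 0 < K) by (specialize (H (r / 2) ltac:(lra)); nra).
  set (e := Rmin (r / 2) (Cmod x / (2 * K))).
  assert (He : 0 < e) by (apply Rmin_glb_lt; [lra | apply Rdiv_lt_0_compat; lra]).
  assert (E1 : e <= r / 2) by apply Rmin_l.
  assert (E2 : K * e <= Cmod x / 2).
  { apply Rle_trans with (K * (Cmod x / (2 * K))); [apply Rmult_le_compat_l; [lra | apply Rmin_r]|].
    right. field. lra. }
  specialize (H e ltac:(lra)). lra.
Qed.

Section Excision.

Variable psi : C -> C.
Variables a b c d u1 u2 e : R.
Hypothesis He : 0 < e.
Hypotheses (Hx1 : a < u1 - e) (Hx2 : u1 + e < b) (Hy1 : c < u2 - e) (Hy2 : u2 + e < d).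
Hypothesis Hpsi : forall z, in_rect a b c d z -> z <> (u1, u2) -> C_holo_at psi z.

Let ex_CInt_h y p q : c <= y <= d -> y <> u2 -> a <= p <= q -> q <= b ->
  ex_CInt (fun x => psi (x, y)) p q.
Proof.
  intros Hy Hyu Hp Hq. apply ex_CInt_continuous. intros x Hx.
  rewrite Rmin_left, Rmax_right in Hx by lra.
  apply continuous_horizontal, C_holo_at_continuous, Hpsi; [split; simpl; lra|].
  intro E. injection E. lra.
Qed.

Let ex_CInt_v x p q : a <= x <= b -> x <> u1 -> c <= p <= q -> q <= d ->
  ex_CInt (fun y => psi (x, y)) p q.
Proof.
  intros Hx Hxu Hp Hq. apply ex_CInt_continuous. intros y Hy.
  rewrite Rmin_left, Rmax_right in Hy by lra.
  apply continuous_vertical, C_holo_at_continuous, Hpsi; [split; simpl; lra|].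
  intro E. injection E. lra.
Qed.

Let goursat_avoiding a' b' c' d' : a <= a' <= b' -> b' <= b -> c <= c' <= d' -> d' <= d ->
  (b' < u1 \/ u1 < a' \/ d' < u2 \/ u2 < c') -> rect_int psi a' b' c' d' = 0%C.
Proof.
  intros Ha Hb Hc Hd Hout. apply goursat; [lra | lra|].
  intros z [Zx Zy]. apply Hpsi; [split; lra|].
  intro E. subst z. simpl in *. lra.
Qed.

(* Cut the rectangle into the small square around [u] and four rectangles
   avoiding [u], on which Goursat's lemma applies. *)
Lemma rect_int_excise : rect_int psi a b c d = rect_int psi (u1 - e) (u1 + e) (u2 - e) (u2 + e).
Proof.
  rewrite (rect_int_split_x psi a (u1 - e) b c d) by (apply ex_CInt_h; lra).
  rewrite (rect_int_split_x psi (u1 - e) (u1 + e) b c d) by (apply ex_CInt_h; lra).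
  rewrite (rect_int_split_y psi (u1 - e) (u1 + e) c (u2 - e) d) by (apply ex_CInt_v; lra).
  rewrite (rect_int_split_y psi (u1 - e) (u1 + e) (u2 - e) (u2 + e) d) by (apply ex_CInt_v; lra).
  rewrite (goursat_avoiding a (u1 - e) c d), (goursat_avoiding (u1 + e) b c d),
    (goursat_avoiding (u1 - e) (u1 + e) c (u2 - e)), (goursat_avoiding (u1 - e) (u1 + e) (u2 + e) d)
    by lra.
  ring.
Qed.

Lemma ex_rect_int_excised : ex_rect_int psi (u1 - e) (u1 + e) (u2 - e) (u2 + e).
Proof.
  refine (conj _ (conj _ (conj _ _)));
    [apply ex_CInt_h | apply ex_CInt_v | apply ex_CInt_h | apply ex_CInt_v]; lra.
Qed.

Lemma on_rect_bd_excised z : on_rect_bd (u1 - e) (u1 + e) (u2 - e) (u2 + e) z ->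
  z <> (u1, u2) /\ Cmod (z - (u1, u2)) <= 2 * e.
Proof.
  destruct z as [zx zy]. unfold on_rect_bd; simpl. intros Hz. split.
  - intro E. injection E. intros. destruct Hz as [[_ [X|X]]|[_ [X|X]]]; lra.
  - eapply Rle_trans; [apply Cmod_le_abs_sum|]. simpl.
    assert (Rabs (zx + - u1) <= e) by (apply Rabs_le; destruct Hz as [[? [X|X]]|[? [X|X]]]; lra).
    assert (Rabs (zy + - u2) <= e) by (apply Rabs_le; destruct Hz as [[? [X|X]]|[? [X|X]]]; lra).
    lra.
Qed.

End Excision.

Lemma rect_int_diff_quot f a b c d u1 u2 : a < u1 < b -> c < u2 < d ->
  (forall z, in_rect a b c d z -> C_holo_at f z) ->
  rect_int (diff_quot f (u1, u2)) a b c d = 0%C.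
Proof.
  intros Hu1 Hu2 Hf.
  set (u := (u1, u2) : C).
  destruct (Hf u) as [lu Hlu]; [split; simpl; lra|].
  destruct (is_Cderive_local_lipschitz f u lu Hlu) as [d1 [Hd1 Hb]].
  set (r := Rmin (u1 - a) (Rmin (b - u1) (Rmin (u2 - c) (Rmin (d - u2) (d1 / 2))))).
  assert (Hr : 0 < r) by (unfold r; repeat apply Rmin_glb_lt; lra).
  assert (R1 : r <= u1 - a) by apply Rmin_l.
  assert (R2 : r <= b - u1) by (eapply Rle_trans; [apply Rmin_r | apply Rmin_l]).
  assert (R3 : r <= u2 - c) by (do 2 (eapply Rle_trans; [apply Rmin_r|]); apply Rmin_l).
  assert (R4 : r <= d - u2) by (do 3 (eapply Rle_trans; [apply Rmin_r|]); apply Rmin_l).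
  assert (R5 : r <= d1 / 2) by (do 3 (eapply Rle_trans; [apply Rmin_r|]); apply Rmin_r).
  assert (Hpsi : forall z, in_rect a b c d z -> z <> u -> C_holo_at (diff_quot f u) z)
    by (intros z Hz Hzu; apply C_holo_at_diff_quot; auto).
  apply (C_eq_0_of_small _ (8 * (Cmod lu + 1)) r Hr). intros e [He Her].
  rewrite (rect_int_excise (diff_quot f u) a b c d u1 u2 e); [|lra ..|exact Hpsi].
  replace (8 * (Cmod lu + 1) * e) with (2 * (((u1 + e) - (u1 - e)) + ((u2 + e) - (u2 - e))) * (Cmod lu + 1)) by ring.
  apply rect_int_norm_le; [lra | lra | apply (ex_rect_int_excised _ a b c d); auto; lra|].
  intros z Hz. destruct (on_rect_bd_excised u1 u2 e He z Hz) as [Hzu Hzd]. fold u in Hzu, Hzd.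
  unfold diff_quot. destruct (Ceq_dec z u) as [E|_]; [contradiction|].
  assert (Pz : 0 < Cmod (z - u)) by (apply Cmod_sub_pos, Hzu).
  rewrite Cmod_div by (apply Cmod_gt_0; exact Pz).
  apply (Rmult_le_reg_r (Cmod (z - u))); [exact Pz|].
  replace (Cmod (f z - f u) / Cmod (z - u) * Cmod (z - u)) with (Cmod (f z - f u)) by (field; lra).
  apply Hb. lra.
Qed.

Lemma RInt_poisson_ge_1 (g : R -> R) (s k : R) : 0 < s -> ex_RInt g (-s) s ->
  (forall t, -s <= t <= s -> k * g t = s / (t * t + s * s)) -> 1 <= k * RInt g (-s) s.
Proof.
  intros Hs Hg H.
  change (1 <= scal k (RInt g (-s) s)). rewrite <- (RInt_scal g (-s) s k Hg).
  apply Rle_trans with (RInt (fun _ => 1 / (2 * s)) (-s) s).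
  { rewrite RInt_const. simpl. unfold scal; simpl. unfold mult; simpl. right. field. lra. }
  apply RInt_le; [lra | apply ex_RInt_const | apply (ex_RInt_scal g _ _ k Hg) |].
  intros t Ht. unfold scal; simpl; unfold mult; simpl. rewrite H by lra.
  assert (0 <= t * t <= s * s) by nra.
  assert (0 < t * t + s * s) by nra.
  apply (Rmult_le_reg_r (2 * s * (t * t + s * s))); [apply Rmult_lt_0_compat; lra|].
  replace (1 / (2 * s) * (2 * s * (t * t + s * s))) with (t * t + s * s) by (field; lra).
  replace (s / (t * t + s * s) * (2 * s * (t * t + s * s))) with (2 * s * s) by (field; lra).
  lra.
Qed.

Section CauchySquare.

Variable s : R.
Hypothesis Hs : 0 < s.

Lemma square_bd_Cmod_ge z : on_rect_bd (-s) s (-s) s z -> s <= Cmod z.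
Proof.
  intros Hz. eapply Rle_trans; [|apply Rmax_Cmod]. apply Rmax_Rle.
  destruct Hz as [[_ [E|E]]|[_ [E|E]]]; rewrite E; [right | right | left | left];
    rewrite ?Rabs_Ropp, Rabs_pos_eq; lra.
Qed.

Lemma square_bd_far z u : on_rect_bd (-s) s (-s) s z -> Cmod u < s / 2 -> s / 2 < Cmod (z - u).
Proof.
  intros Hz Hu. assert (H := square_bd_Cmod_ge z Hz).
  assert (T := Cmod_triangle (z - u) u). replace (z - u + u)%C with z in T by ring. lra.
Qed.

Lemma square_bd_neq z u : on_rect_bd (-s) s (-s) s z -> Cmod u < s / 2 -> z <> u.
Proof. intros Hz Hu E. subst. assert (H := square_bd_Cmod_ge u Hz). lra. Qed.

Lemma square_bd_neq_0 z : on_rect_bd (-s) s (-s) s z -> z <> 0%C.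
Proof. intros Hz. apply square_bd_neq; [exact Hz | rewrite Cmod_0; lra]. Qed.

Definition cauchy_square (phi : C -> C) (u : C) : C :=
  rect_int (fun z => phi z / (z - u))%C (-s) s (-s) s.

Lemma ex_rect_int_cauchy_kernel phi u : Cmod u < s / 2 ->
  (forall z, on_rect_bd (-s) s (-s) s z -> C_holo_at phi z) ->
  ex_rect_int (fun z => phi z / (z - u))%C (-s) s (-s) s.
Proof.
  intros Hu Hphi. apply ex_rect_int_holo; [lra | lra|].
  intros z Hz. apply C_holo_at_div_sub; [apply Hphi, Hz | apply square_bd_neq; auto].
Qed.

(* Second-order Taylor remainder of the Cauchy kernel [1 / (z - u)] at [u = 0]. *)
Lemma cauchy_kernel_remainder_bound phi B z u : (forall z, on_rect_bd (-s) s (-s) s z -> Cmod (phi z) <= B) ->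
  on_rect_bd (-s) s (-s) s z -> Cmod u < s / 2 ->
  Cmod (phi z / (z - u) - phi z / (z - 0) - u * (phi z / (z - 0) / (z - 0)))%C
    <= 2 * B * (Cmod u * Cmod u) / (s * s * s).
Proof.
  intros HB Hz Hu.
  assert (Hz0 := square_bd_Cmod_ge z Hz). assert (Hzu := square_bd_far z u Hz Hu).
  assert (Nz : z <> 0%C) by (apply square_bd_neq_0, Hz).
  assert (Nzu : (z - u)%C <> 0%C) by (apply Cmod_gt_0; lra).
  replace (phi z / (z - u) - phi z / (z - 0) - u * (phi z / (z - 0) / (z - 0)))%C
    with (phi z * (u * u) / ((z - u) * (z * z)))%C by (field; auto).
  rewrite Cmod_div by (repeat apply Cmult_neq_0; auto). rewrite !Cmod_mult.
  assert (0 <= Cmod u) by apply Cmod_ge_0.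
  assert (Hphi := HB z Hz). assert (0 <= Cmod (phi z)) by apply Cmod_ge_0.
  apply Rle_trans with (B * (Cmod u * Cmod u) / (s / 2 * (s * s))).
  - unfold Rdiv. apply Rmult_le_compat; [nra | | nra |].
    + apply Rlt_le, Rinv_0_lt_compat. apply Rmult_lt_0_compat; [lra | nra].
    + apply Rinv_le_contravar; [apply Rmult_lt_0_compat; nra|].
      apply Rmult_le_compat; nra.
  - right. field. lra.
Qed.

Lemma is_Cderive_cauchy_square phi : (forall z, on_rect_bd (-s) s (-s) s z -> C_holo_at phi z) ->
  is_Cderive (cauchy_square phi) 0%C (cauchy_square (fun z => phi z / (z - 0))%C 0%C).
Proof.
  intros Hphi.
  assert (Hss : -s <= s) by lra.
  destruct (rect_int_bounded phi (-s) s (-s) s Hss Hss) as [B [HB0 HB]].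
  { intros z Hz. apply C_holo_at_continuous, Hphi, Hz. }
  assert (S0 : Cmod 0%C < s / 2) by (rewrite Cmod_0; lra).
  assert (Sk : forall u, Cmod u < s / 2 -> ex_rect_int (fun z => phi z / (z - u))%C (-s) s (-s) s)
    by (intros u Hu; apply ex_rect_int_cauchy_kernel; auto).
  assert (S2 : ex_rect_int (fun z => phi z / (z - 0) / (z - 0))%C (-s) s (-s) s).
  { apply (ex_rect_int_cauchy_kernel (fun z => phi z / (z - 0))%C); [exact S0|].
    intros z Hz. apply C_holo_at_div_sub; [apply Hphi, Hz | apply square_bd_neq_0, Hz]. }
  apply is_Cderive_eps. intros eps Heps.
  set (del := Rmin (s / 2) (eps * (s * s) / (16 * B + 1))).
  assert (Hdel : 0 < del).
  { apply Rmin_glb_lt; [lra|]. apply Rdiv_lt_0_compat; [apply Rmult_lt_0_compat; nra | lra]. }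
  exists del. split; [exact Hdel|]. intros u Hu. rewrite Cminus_0_r in Hu |- *.
  assert (Hu1 : Cmod u < s / 2) by (eapply Rlt_le_trans; [exact Hu | apply Rmin_l]).
  assert (Hu2 : Cmod u < eps * (s * s) / (16 * B + 1)) by (eapply Rlt_le_trans; [exact Hu | apply Rmin_r]).
  unfold cauchy_square. rewrite (Cmult_comm _ u), <- rect_int_linear3 by auto.
  eapply Rle_trans.
  { apply rect_int_norm_le; [lra | lra | apply ex_rect_int_linear3; auto |].
    intros z Hz. apply (cauchy_kernel_remainder_bound phi B); auto. }
  assert (0 <= Cmod u) by apply Cmod_ge_0.
  replace (2 * (s - - s + (s - - s)) * (2 * B * (Cmod u * Cmod u) / (s * s * s)))
    with (Cmod u * (16 * B * Cmod u / (s * s))) by (field; lra).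
  rewrite Rmult_comm. apply Rmult_le_compat_r; [exact H|].
  apply (Rmult_le_reg_r (s * s)); [nra|].
  replace (16 * B * Cmod u / (s * s) * (s * s)) with (16 * B * Cmod u) by (field; lra).
  apply (Rmult_lt_compat_r (16 * B + 1)) in Hu2; [|lra].
  replace (eps * (s * s) / (16 * B + 1) * (16 * B + 1)) with (eps * (s * s)) in Hu2 by (field; lra).
  nra.
Qed.

(* Each side contributes at least [1] to the imaginary part, as [s / (t^2 + s^2) >= 1 / (2 s)]
   on [[-s, s]]. *)
Lemma cauchy_square_one_neq_0 : cauchy_square (fun _ => 1%C) 0%C <> 0%C.
Proof.
  intros E.
  set (h := (fun z => 1 / (z - 0))%C).
  destruct (ex_rect_int_cauchy_kernel (fun _ => 1%C) 0%C) as [S1 [S2 [S3 S4]]].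
  { rewrite Cmod_0; lra. }
  { intros z _. eexists. apply is_Cderive_const. }
  fold h in S1, S2, S3, S4.
  assert (I1 : 1 <= 1 * snd (CInt (fun x => h (x, -s)) (-s) s)).
  { rewrite CInt_snd by exact S1. apply RInt_poisson_ge_1; [exact Hs | |].
    - exact (@ex_RInt_fct_extend_snd R_NormedModule R_NormedModule _ _ _ S1).
    - intros t Ht. unfold h. simpl. field. nra. }
  assert (I2 : 1 <= 1 * fst (CInt (fun y => h (s, y)) (-s) s)).
  { rewrite CInt_fst by exact S2. apply RInt_poisson_ge_1; [exact Hs | |].
    - exact (@ex_RInt_fct_extend_fst R_NormedModule R_NormedModule _ _ _ S2).
    - intros t Ht. unfold h. simpl. field. nra. }
  assert (I3 : 1 <= -1 * snd (CInt (fun x => h (x, s)) (-s) s)).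
  { rewrite CInt_snd by exact S3. apply RInt_poisson_ge_1; [exact Hs | |].
    - exact (@ex_RInt_fct_extend_snd R_NormedModule R_NormedModule _ _ _ S3).
    - intros t Ht. unfold h. simpl. field. nra. }
  assert (I4 : 1 <= -1 * fst (CInt (fun y => h (-s, y)) (-s) s)).
  { rewrite CInt_fst by exact S4. apply RInt_poisson_ge_1; [exact Hs | |].
    - exact (@ex_RInt_fct_extend_fst R_NormedModule R_NormedModule _ _ _ S4).
    - intros t Ht. unfold h. simpl. field. nra. }
  change (rect_int h (-s) s (-s) s = 0%C) in E. unfold rect_int in E. apply (f_equal snd) in E.
  revert E I1 I2 I3 I4.
  generalize (CInt (fun x => h (x, -s)) (-s) s) (CInt (fun y => h (s, y)) (-s) s)
    (CInt (fun x => h (x, s)) (-s) s) (CInt (fun y => h (-s, y)) (-s) s).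
  intros [p1 q1] [p2 q2] [p3 q3] [p4 q4]. simpl. lra.
Qed.

End CauchySquare.

Lemma Cmod_lt_square (u : C) (s : R) : Cmod u < s -> -s < fst u < s /\ -s < snd u < s.
Proof.
  intros Hu. generalize (Rmax_Cmod u). intros H.
  assert (Rabs (fst u) < s) by (generalize (Rmax_l (Rabs (fst u)) (Rabs (snd u))); lra).
  assert (Rabs (snd u) < s) by (generalize (Rmax_r (Rabs (fst u)) (Rabs (snd u))); lra).
  apply Rabs_def2 in H0, H1. lra.
Qed.

Lemma Cmod_le_square (z : C) (s : R) : in_rect (-s) s (-s) s z -> Cmod z <= 2 * s.
Proof.
  intros [Hx Hy]. eapply Rle_trans; [apply Cmod_le_abs_sum|].
  assert (Rabs (fst z) <= s) by (apply Rabs_le; lra).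
  assert (Rabs (snd z) <= s) by (apply Rabs_le; lra). lra.
Qed.

Lemma Ccontinuous_eq_limit (Q g : C -> C) (v : C) (rho : R) : 0 < rho ->
  Ccontinuous Q 0%C -> (forall u : C, u <> 0%C -> Cmod u < rho -> Q u = g u) ->
  (forall eps, 0 < eps -> exists d, 0 < d /\
     forall u : C, u <> 0%C -> Cmod u < d -> Cmod (g u - v) <= eps) ->
  Q 0%C = v.
Proof.
  intros Hrho HQ HQg Hg.
  enough (E : (Q 0%C - v)%C = 0%C) 
    by (replace (Q 0%C) with ((Q 0%C - v) + v)%C by ring; rewrite E; ring).
  apply (C_eq_0_of_small _ 2 1 Rlt_0_1). intros eps [Heps _].
  destruct (HQ eps Heps) as [d1 [Hd1 H1]].
  destruct (Hg eps Heps) as [d2 [Hd2 H2]].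
  set (t := Rmin (Rmin d1 d2) rho / 2).
  assert (Ht : 0 < t) by (unfold t; apply Rdiv_lt_0_compat; [repeat apply Rmin_glb_lt|]; lra).
  assert (Hm1 : Rmin (Rmin d1 d2) rho <= d1) by (eapply Rle_trans; apply Rmin_l).
  assert (Hm2 : Rmin (Rmin d1 d2) rho <= d2) by (eapply Rle_trans; [apply Rmin_l | apply Rmin_r]).
  assert (Hm3 : Rmin (Rmin d1 d2) rho <= rho) by apply Rmin_r.
  assert (Mt : Cmod (RtoC t) = t) by (rewrite Cmod_R, Rabs_pos_eq; lra).
  assert (Nt : RtoC t <> 0%C) by (intro X; rewrite X, Cmod_0 in Mt; lra).
  specialize (H1 (RtoC t) ltac:(rewrite Cminus_0_r; unfold t in *; lra)).
  specialize (H2 (RtoC t) Nt ltac:(unfold t in *; lra)).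
  rewrite <- HQg in H2 by (auto; unfold t in *; lra).
  replace (Q 0%C - v)%C with ((Q t - v) - (Q t - Q 0%C))%C by ring.
  eapply Rle_trans; [apply Cmod_triangle|]. rewrite Cmod_opp. lra.
Qed.

Section RemovableSingularity.

Variable k : C -> C.
Variables (r : R) (l0 : C).
Hypothesis Hr : 0 < r.
Hypothesis Hk : forall u, Cmod u < r -> C_holo_at k u.
Hypothesis Hk0 : k 0%C = 0%C.
Hypothesis Hl0 : is_Cderive k 0%C l0.

Let s := r / 3.
Let W := cauchy_square s (fun _ => 1%C).
Let M := cauchy_square s (fun z => k z / (z - 0))%C.

Let Hs : 0 < s.
Proof. unfold s. lra. Qed.

Let holo_square z : in_rect (-s) s (-s) s z -> C_holo_at k z.
Proof. intros Hz. apply Hk. eapply Rle_lt_trans; [apply Cmod_le_square, Hz|]. unfold s. lra. Qed.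

Let holo_square_bd z : on_rect_bd (-s) s (-s) s z -> C_holo_at k z.
Proof. intros Hz. apply holo_square, on_rect_bd_in_rect; [lra | lra | exact Hz]. Qed.

(* Cauchy's formula [k u = M u / W u], with the winding factor [W] left uncomputed. *)
Lemma cauchy_square_formula u : Cmod u < s / 2 -> (u * M u = k u * W u)%C.
Proof.
  intros Hu.
  assert (Hu0 : Cmod 0%C < s / 2) by (rewrite Cmod_0; lra).
  assert (Cu : rect_int (diff_quot k u) (-s) s (-s) s = 0%C).
  { destruct (Cmod_lt_square u s ltac:(lra)) as [Hu1 Hu2].
    destruct u as [u1 u2]. apply rect_int_diff_quot; auto. }
  assert (C0 : rect_int (diff_quot k 0%C) (-s) s (-s) s = 0%C)
    by (apply (rect_int_diff_quot k (-s) s (-s) s 0 0); auto; lra).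
  assert (Sq : forall v, Cmod v < s / 2 -> ex_rect_int (diff_quot k v) (-s) s (-s) s).
  { intros v Hv. apply ex_rect_int_holo; [lra | lra|]. intros z Hz.
    apply C_holo_at_diff_quot; [apply holo_square_bd, Hz | apply (square_bd_neq s Hs); auto]. }
  assert (SW : ex_rect_int (fun z => 1 / (z - u))%C (-s) s (-s) s).
  { apply (ex_rect_int_cauchy_kernel s Hs (fun _ => 1%C)); [exact Hu|].
    intros z _. eexists. apply is_Cderive_const. }
  assert (SM : ex_rect_int (fun z => k z / (z - 0) / (z - u))%C (-s) s (-s) s).
  { apply (ex_rect_int_cauchy_kernel s Hs); [exact Hu|]. intros z Hz.
    apply C_holo_at_div_sub; [apply holo_square_bd, Hz | apply (square_bd_neq_0 s Hs); auto]. }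
  unfold M, W, cauchy_square. rewrite <- rect_int_Cmult_l by exact SM.
  rewrite (rect_int_ext _ (fun z => diff_quot k u z - diff_quot k 0%C z - (- k u) * (1 / (z - u)))%C);
    [| lra | lra |].
  2: { intros z Hz.
       assert (Nu : z <> u) by (apply (square_bd_neq s Hs); auto).
       assert (N0 : z <> 0%C) by (apply (square_bd_neq_0 s Hs); auto).
       assert ((z - u)%C <> 0%C) by (apply Cmod_gt_0, Cmod_sub_pos, Nu).
       unfold diff_quot. destruct (Ceq_dec z u); [contradiction|].
       destruct (Ceq_dec z 0%C); [contradiction|].
       rewrite Hk0, !Cminus_0_r. field. auto. }
  rewrite rect_int_linear3 by (auto; lra). rewrite Cu, C0. ring.
Qed.

Let W_holo : C_holo_at W 0%C.
Proof.
  eexists. apply is_Cderive_cauchy_square; [exact Hs|]. intros z _. eexists. apply is_Cderive_const.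
Qed.

Let M_holo : C_holo_at M 0%C.
Proof.
  eexists. apply is_Cderive_cauchy_square; [exact Hs|]. intros z Hz.
  apply C_holo_at_div_sub; [apply holo_square_bd, Hz | apply (square_bd_neq_0 s Hs z Hz)].
Qed.

(* Near [0], [k u / u = M u / W u], and the right-hand side is differentiable at [0]. *)
Theorem removable_singularity :
  exists L, is_Cderive (fun u => if Ceq_dec u 0%C then l0 else (k u / u)%C) 0%C L.
Proof.
  assert (W0 : W 0%C <> 0%C) by (apply cauchy_square_one_neq_0, Hs).
  destruct (Ccontinuous_neq_0_near W 0%C (C_holo_at_continuous _ _ W_holo) W0) as [rho1 [Hrho1 Wnz]].
  set (rho := Rmin (s / 2) rho1).
  assert (Hrho : 0 < rho) by (apply Rmin_glb_lt; lra).
  assert (Rho1 : rho <= s / 2) by apply Rmin_l.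
  assert (Rho2 : rho <= rho1) by apply Rmin_r.
  set (Q := fun u => (M u * / W u)%C).
  assert (HQ : C_holo_at Q 0%C).
  { apply C_holo_at_mult; [exact M_holo|].
    apply (C_holo_at_comp (fun w => / w)%C W); [eexists; apply is_Cderive_inv, W0 | exact W_holo]. }
  assert (QE : forall u : C, u <> 0%C -> Cmod u < rho -> Q u = (k u / u)%C).
  { intros u Hu0 Hu. assert (Wu := Wnz u ltac:(rewrite Cminus_0_r; lra)). unfold Q.
    assert (Mu : M u = (k u * W u / u)%C)
      by (rewrite <- cauchy_square_formula by lra; field; auto).
    rewrite Mu. field. auto. }
  assert (Q0 : Q 0%C = l0).
  { apply (Ccontinuous_eq_limit Q (fun u => k u / u)%C l0 rho Hrho); [apply C_holo_at_continuous, HQ | exact QE|].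
    intros eps Heps. destruct (is_Cderive_diff_quot_limit k 0%C l0 Hl0 eps Heps) as [d [Hd H]].
    exists d. split; [exact Hd|]. intros u Hu0 Hu.
    specialize (H u Hu0 ltac:(rewrite Cminus_0_r; exact Hu)).
    rewrite Hk0, !Cminus_0_r in H. replace (k u - 0)%C with (k u) in H by ring. exact H. }
  destruct HQ as [LQ HQ]. exists LQ. apply (is_Cderive_ext_loc Q _ 0%C LQ rho Hrho); [|exact HQ].
  intros w Hw. rewrite Cminus_0_r in Hw. destruct (Ceq_dec w 0%C) as [E|E].
  - subst w. exact Q0.
  - apply QE; auto.
Qed.

End RemovableSingularity.

(** * Limits within a set *)

Definition Climit_within (D : C -> Prop) (f : C -> C) (p v : C) : Prop :=
  forall eps, 0 < eps -> exists d, 0 < d /\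
    forall w, Cmod (w - p) < d -> D w -> Cmod (f w - v) < eps.

Lemma cont_from_Climit_within (D : C -> Prop) (f : C -> C) (p : C) :
  cont_from D f p <-> Climit_within D f p (f p).
Proof.
  split.
  - intros H eps Heps.
    assert (L : @locally C_UniformSpace (f p) (fun v => Cmod (v - f p) < eps))
      by (apply (proj2 (locally_C_ball _ _)); exists eps; auto).
    destruct (proj1 (locally_C_ball _ _) (H _ L)) as [d [Hd H1]]. exists d. split; auto.
  - intros H P HP. destruct (proj1 (locally_C_ball _ _) HP) as [eps [Heps HP']].
    destruct (H eps Heps) as [d [Hd H1]]. unfold filtermap, within. apply (proj2 (locally_C_ball _ _)).
    exists d. split; [exact Hd|]. intros w Hw Dw. apply HP', H1; auto.
Qed.

Lemma Climit_within_continuous D f p : Ccontinuous f p -> Climit_within D f p (f p).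
Proof. intros H eps Heps. destruct (H eps Heps) as [d [Hd H1]]. exists d. auto. Qed.

Lemma Climit_within_ext_loc D f g p v d0 : 0 < d0 ->
  (forall w, Cmod (w - p) < d0 -> D w -> f w = g w) ->
  Climit_within D f p v -> Climit_within D g p v.
Proof.
  intros Hd0 E H eps Heps. destruct (H eps Heps) as [d [Hd H1]].
  exists (Rmin d0 d). split; [apply Rmin_glb_lt; auto|]. intros w Hw Dw.
  assert (Cmod (w - p) < d0) by (eapply Rlt_le_trans; [exact Hw | apply Rmin_l]).
  assert (Cmod (w - p) < d) by (eapply Rlt_le_trans; [exact Hw | apply Rmin_r]).
  rewrite <- E; auto.
Qed.

Lemma Climit_within_comp D1 D2 (g h : C -> C) p q v d0 : 0 < d0 ->
  (forall w, Cmod (w - p) < d0 -> D1 w -> D2 (h w)) ->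
  Climit_within D1 h p q -> Climit_within D2 g q v -> Climit_within D1 (fun w => g (h w)) p v.
Proof.
  intros Hd0 HD Hh Hg eps Heps.
  destruct (Hg eps Heps) as [d1 [Hd1 H1]]. destruct (Hh d1 Hd1) as [d2 [Hd2 H2]].
  exists (Rmin d0 d2). split; [apply Rmin_glb_lt; auto|]. intros w Hw Dw.
  assert (Cmod (w - p) < d0) by (eapply Rlt_le_trans; [exact Hw | apply Rmin_l]).
  assert (Cmod (w - p) < d2) by (eapply Rlt_le_trans; [exact Hw | apply Rmin_r]).
  apply H1; auto.
Qed.

Lemma Climit_within_mult D f g p a b : Climit_within D f p a -> Climit_within D g p b ->
  Climit_within D (fun w => f w * g w)%C p (a * b)%C.
Proof.
  intros Hf Hg eps Heps.
  assert (Ka : 0 < Cmod a + 1) by (generalize (Cmod_ge_0 a); lra).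
  assert (Kb : 0 < Cmod b + 1) by (generalize (Cmod_ge_0 b); lra).
  destruct (Hf (eps / (2 * (Cmod b + 1)))) as [d1 [Hd1 H1]]; [apply Rdiv_lt_0_compat; lra|].
  destruct (Hg (Rmin 1 (eps / (2 * (Cmod a + 1))))) as [d2 [Hd2 H2]].
  { apply Rmin_glb_lt; [lra | apply Rdiv_lt_0_compat; lra]. }
  exists (Rmin d1 d2). split; [apply Rmin_glb_lt; auto|]. intros w Hw Dw.
  specialize (H1 w ltac:(eapply Rlt_le_trans; [exact Hw | apply Rmin_l]) Dw).
  specialize (H2 w ltac:(eapply Rlt_le_trans; [exact Hw | apply Rmin_r]) Dw).
  assert (G1 : Cmod (g w - b) < 1) by (eapply Rlt_le_trans; [exact H2 | apply Rmin_l]).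
  assert (G2 : Cmod (g w - b) < eps / (2 * (Cmod a + 1))) by (eapply Rlt_le_trans; [exact H2 | apply Rmin_r]).
  assert (Gw : Cmod (g w) <= Cmod b + 1).
  { replace (g w) with (b + (g w - b))%C by ring. eapply Rle_trans; [apply Cmod_triangle | lra]. }
  replace (f w * g w - a * b)%C with ((f w - a) * g w + a * (g w - b))%C by ring.
  eapply Rle_lt_trans; [apply Cmod_triangle|]. rewrite !Cmod_mult.
  assert (A1 : Cmod (f w - a) * Cmod (g w) < eps / 2).
  { apply Rle_lt_trans with (Cmod (f w - a) * (Cmod b + 1)).
    - apply Rmult_le_compat_l; [apply Cmod_ge_0 | exact Gw].
    - apply (Rmult_lt_compat_r (Cmod b + 1)) in H1; [|exact Kb].
      replace (eps / (2 * (Cmod b + 1)) * (Cmod b + 1)) with (eps / 2) in H1 by (field; lra).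
      exact H1. }
  assert (A2 : Cmod a * Cmod (g w - b) < eps / 2).
  { apply Rle_lt_trans with ((Cmod a + 1) * Cmod (g w - b)).
    - apply Rmult_le_compat_r; [apply Cmod_ge_0 | lra].
    - apply (Rmult_lt_compat_l (Cmod a + 1)) in G2; [|exact Ka].
      replace ((Cmod a + 1) * (eps / (2 * (Cmod a + 1)))) with (eps / 2) in G2 by (field; lra).
      exact G2. }
  lra.
Qed.

(** * The inversion [Psi] *)

Lemma Psi_neq_0 (z0 z : C) : z <> z0 -> Psi z0 z <> 0%C.
Proof.
  intros H X. assert (E : ((z - z0) * Psi z0 z)%C = 1%C)
    by (unfold Psi; field; apply Cmod_gt_0, Cmod_sub_pos, H).
  rewrite X, Cmult_0_r in E. injection E. lra.
Qed.

Lemma Psi_inv (z0 z : C) : z <> z0 -> (z0 + / Psi z0 z)%C = z.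
Proof. intros H. unfold Psi. field. apply Cmod_gt_0, Cmod_sub_pos, H. Qed.

Lemma Psi_translate_inv (z0 w : C) : w <> 0%C -> Psi z0 (z0 + / w)%C = w.
Proof. intros H. unfold Psi. replace (z0 + / w - z0)%C with (/ w)%C by ring. field. exact H. Qed.

Lemma C_holo_at_Psi (z0 z : C) : z <> z0 -> C_holo_at (Psi z0) z.
Proof.
  intros H. apply (C_holo_at_comp (fun w => / w)%C (fun w => w - z0)%C).
  - eexists. apply is_Cderive_inv, Cmod_gt_0, Cmod_sub_pos, H.
  - eexists. apply is_Cderive_minus; [apply is_Cderive_id | apply is_Cderive_const].
Qed.

Lemma C_holo_at_infty_translate (F : C -> C) (v a : C) :
  C_holo_at (fun w => if Ceq_dec w 0%C then v else F (a + / w))%C 0%C -> C_holo_at_infty F v.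
Proof.
  intros HF.
  set (phi := fun w => (w * / (1 - a * w))%C).
  assert (Hphi0 : phi 0%C = 0%C) by (unfold phi; ring).
  set (rho := / (Cmod a + 1)).
  assert (Hrho : 0 < rho) by (apply Rinv_0_lt_compat; generalize (Cmod_ge_0 a); lra).
  assert (Hden : forall w, Cmod w < rho -> (1 - a * w)%C <> 0%C).
  { intros w Hw X. assert (Y : (a * w)%C = 1%C) 
      by (replace (a * w)%C with (1 - (1 - a * w))%C by ring; rewrite X; ring).
    apply (f_equal Cmod) in Y. rewrite Cmod_mult, Cmod_1 in Y.
    assert (0 <= Cmod a) by apply Cmod_ge_0. assert (0 <= Cmod w) by apply Cmod_ge_0.
    apply (Rmult_lt_compat_l (Cmod a + 1)) in Hw; [|lra].
    unfold rho in Hw. rewrite Rinv_r in Hw by lra. nra. }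
  assert (Dphi : C_holo_at phi 0%C).
  { apply C_holo_at_mult; [apply C_holo_at_id|].
    apply (C_holo_at_comp (fun u => / u)%C (fun w => 1 - a * w)%C).
    - eexists. apply is_Cderive_inv, Hden. rewrite Cmod_0. exact Hrho.
    - eexists. apply is_Cderive_minus; [apply is_Cderive_const|].
      apply (is_Cderive_mult (fun _ => a) (fun w => w)); [apply is_Cderive_const | apply is_Cderive_id]. }
  unfold C_holo_at_infty.
  apply (C_holo_at_ext_loc (fun w => (if Ceq_dec (phi w) 0%C then v else F (a + / phi w))%C) _ 0%C rho Hrho).
  - intros w Hw. rewrite Cminus_0_r in Hw. specialize (Hden w Hw).
    destruct (Ceq_dec w 0%C) as [E|E].
    + subst w. rewrite Hphi0. destruct (Ceq_dec 0%C 0%C) as [_|X]; [reflexivity | contradiction].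
    + destruct (Ceq_dec (phi w) 0%C) as [X|X].
      * exfalso. unfold phi in X. apply (Cmult_neq_0 w (/ (1 - a * w))%C E); [|exact X].
        intro Y. assert (E1 : ((1 - a * w) * / (1 - a * w))%C = 1%C) by (field; exact Hden).
        rewrite Y, Cmult_0_r in E1. injection E1. lra.
      * f_equal. unfold phi. field. split; assumption.
  - apply (C_holo_at_comp (fun u => if Ceq_dec u 0%C then v else F (a + / u))%C phi); [|exact Dphi].
    rewrite Hphi0. exact HF.
Qed.

Lemma C_holo_at_Psi_pullback (fhat : C -> C) (z0 z : C) : z <> z0 -> C_holo_at fhat (Psi z0 z) ->
  C_holo_at (fun z => Psi z0 z * fhat (Psi z0 z))%C z.
Proof.
  intros Hz Hf. assert (HPsi := C_holo_at_Psi z0 z Hz).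
  apply C_holo_at_mult; [exact HPsi | apply C_holo_at_comp; assumption].
Qed.

Lemma Climit_within_Psi_pullback (D Dhat : C -> Prop) (fhat : C -> C) (z0 p : C) : p <> z0 ->
  (forall z, D z -> z <> z0 -> Dhat (Psi z0 z)) -> cont_from Dhat fhat (Psi z0 p) ->
  Climit_within D (fun z => Psi z0 z * fhat (Psi z0 z))%C p (Psi z0 p * fhat (Psi z0 p))%C.
Proof.
  intros Hp HD Hf. assert (Pp := Cmod_sub_pos p z0 Hp).
  assert (HPsi := C_holo_at_continuous _ _ (C_holo_at_Psi z0 p Hp)).
  apply Climit_within_mult; [apply Climit_within_continuous, HPsi|].
  apply (Climit_within_comp D Dhat fhat (Psi z0) p (Psi z0 p) _ (Cmod (p - z0)) Pp).
  - intros w Hw Dw. apply HD; [exact Dw|]. intro E. subst w.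
    rewrite Cmod_sub_sym in Hw. lra.
  - apply Climit_within_continuous, HPsi.
  - apply cont_from_Climit_within, Hf.
Qed.

Lemma C_holo_at_inv_pushforward (f : C -> C) (z0 w : C) : w <> 0%C -> C_holo_at f (z0 + / w)%C ->
  C_holo_at (fun u => f (z0 + / u) / u)%C w.
Proof.
  intros Hw Hf. apply C_holo_at_mult.
  - apply (C_holo_at_comp f (fun u => z0 + / u)%C); [exact Hf | apply C_holo_at_affine_inv, Hw].
  - eexists. apply is_Cderive_inv, Hw.
Qed.

Lemma Climit_within_inv_pushforward (D Dhat : C -> Prop) (f : C -> C) (z0 w : C) : w <> 0%C ->
  (forall u : C, Dhat u -> u <> 0%C -> D (z0 + / u)%C) -> cont_from D f (z0 + / w)%C ->
  Climit_within Dhat (fun u => f (z0 + / u) / u)%C w (f (z0 + / w) / w)%C.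
Proof.
  intros Hw HD Hf. assert (Pw : 0 < Cmod w) by (apply Cmod_gt_0, Hw).
  assert (Hinv : Ccontinuous (fun u => / u)%C w) by (eapply is_Cderive_continuous, is_Cderive_inv, Hw).
  apply (Climit_within_mult Dhat (fun u => f (z0 + / u)%C) (fun u => / u)%C w);
    [|exact (Climit_within_continuous Dhat _ w Hinv)].
  apply (Climit_within_comp Dhat D f (fun u => z0 + / u)%C w (z0 + / w)%C _ (Cmod w) Pw).
  - intros u Hu Du. apply HD; [exact Du|]. intro E. subst u.
    rewrite Cmod_sub_sym, Cminus_0_r in Hu. lra.
  - apply (Climit_within_continuous Dhat (fun u => z0 + / u)%C w).
    apply C_holo_at_continuous, C_holo_at_affine_inv, Hw.
  - apply cont_from_Climit_within, Hf.
Qed.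

(** * Transfer between the two settings *)

Definition Psi_related (m : nat) (eta : nat -> R -> C) (z0 : C) (f fhat : C -> C) : Prop :=
  forall p, Gamma m eta p -> f p = (Psi z0 p * fhat (Psi z0 p))%C.

Section Transfer.

Variable m : nat.
Variable eta : nat -> R -> C.
Variable G : C -> Prop.
Variable z0 : C.
Hypothesis HS : setting m eta G.
Hypothesis Hz0 : inside eta (m - 1)%nat z0.

Let z0_Gminus : Gminus m eta G z0.
Proof.
  destruct HS as [Hm [_ [_ [_ [_ [_ [_ [_ [_ [HGm _]]]]]]]]]].
  apply HGm. exists (m - 1)%nat. split; [lia | exact Hz0].
Qed.

Let G_neq z : G z -> z <> z0.
Proof. intros H E. subst. exact (proj1 z0_Gminus H). Qed.

Let Gamma_neq p : Gamma m eta p -> p <> z0.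
Proof. intros H E. subst. exact (proj2 z0_Gminus H). Qed.

Let G_far : exists R0, 0 <= R0 /\ forall z, R0 < Cmod z -> G z.
Proof.
  destruct HS as [_ [_ [_ [_ [_ [_ [_ [[r Hr] _]]]]]]]].
  exists (Rmax r 0). split; [apply Rmax_r|]. intros z Hz. apply Hr.
  eapply Rle_lt_trans; [apply Rmax_l | exact Hz].
Qed.

(* [z0] is neither in [G] nor on its boundary, hence not in the closure of [G]. *)
Let Gminus_ball : exists r0, 0 < r0 /\ forall w, Cmod (w - z0) < r0 -> Gminus m eta G w.
Proof.
  destruct HS as [_ [_ [_ [_ [_ [_ [_ [_ [Hcl _]]]]]]]]].
  destruct z0_Gminus as [NG NGa].
  assert (NC : ~ C_closure G z0) by (intro X; apply NGa, Hcl; split; auto).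
  apply not_all_ex_not in NC. destruct NC as [eps NC]. apply imply_to_and in NC.
  destruct NC as [Heps NC].
  assert (Far : forall w, G w -> eps <= Cmod (w - z0)).
  { intros w Gw. destruct (Rle_or_lt eps (Cmod (w - z0))) as [X|X]; [exact X|].
    exfalso. apply NC. exists w. auto. }
  exists (eps / 2). split; [lra|]. intros w Hw. split.
  - intro Gw. specialize (Far w Gw). lra.
  - intro Gaw. apply Hcl in Gaw. destruct Gaw as [Clw _].
    destruct (Clw (eps / 2)) as [v [Gv Hv]]; [lra|].
    specialize (Far v Gv).
    assert (T := Cmod_triangle (v - w) (w - z0)).
    replace (v - w + (w - z0))%C with (v - z0)%C in T by ring. lra.
Qed.

Lemma analytic_G_plus_of_hat fhat : analytic_Ghat_plus m eta z0 G fhat ->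
  exists f, analytic_G_plus m eta G f /\ Psi_related m eta z0 f fhat.
Proof.
  intros [Hh Hc]. exists (fun z => Psi z0 z * fhat (Psi z0 z))%C.
  split; [split; [|split]|intros p _; reflexivity].
  - intros z Gz. apply C_holo_at_Psi_pullback; [apply G_neq, Gz|]. apply Hh. right. exists z. auto.
  - apply (C_holo_at_infty_translate _ 0%C z0).
    apply (C_holo_at_ext (fun w => w * fhat w)%C).
    + intros w. destruct (Ceq_dec w 0%C) as [E|E]; [subst; ring|].
      rewrite Psi_translate_inv by exact E. reflexivity.
    + apply C_holo_at_mult; [apply C_holo_at_id | apply Hh; left; reflexivity].
  - intros p Hp. apply cont_from_Climit_within.
    apply (Climit_within_Psi_pullback G (Ghat z0 G)); [apply Gamma_neq, Hp | |].
    + intros z Gz _. right. exists z. auto.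
    + apply Hc. exists p. auto.
Qed.

Let G_far_inv : exists r, 0 < r /\ forall u : C, u <> 0%C -> Cmod u < r -> G (z0 + / u)%C.
Proof.
  destruct G_far as [R0 [HR0 HR]].
  exists (/ (R0 + Cmod z0 + 1)). split; [apply Rinv_0_lt_compat; generalize (Cmod_ge_0 z0); lra|].
  intros u Hu0 Hu. apply HR. assert (Pu : 0 < Cmod u) by (apply Cmod_gt_0, Hu0).
  assert (T := Cmod_triangle (z0 + / u) (- z0)). replace (z0 + / u + - z0)%C with (/ u)%C in T by ring.
  rewrite Cmod_opp, Cmod_inv in T by exact Hu0.
  assert (R0 + Cmod z0 + 1 < / Cmod u).
  { rewrite <- (Rinv_inv (R0 + Cmod z0 + 1)). apply Rinv_lt_contravar; [|exact Hu].
    apply Rmult_lt_0_compat; [exact Pu|]. apply Rinv_0_lt_compat. generalize (Cmod_ge_0 z0). lra. }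
  lra.
Qed.

(* [f (z0 + 1/w)] vanishes at [w = 0], so the removable singularity theorem applies to its quotient by [w]. *)
Let Ghat_plus_value_at_0 f : analytic_G_plus m eta G f ->
  exists v, C_holo_at (fun w => if Ceq_dec w 0%C then v else (f (z0 + / w) / w)%C) 0%C.
Proof.
  intros [Hh [Hinf _]].
  set (k := fun w : C => if Ceq_dec w 0%C then RtoC 0 else f (z0 + / w)%C).
  assert (Dk0 : C_holo_at k 0%C).
  { enough (H : C_holo_at_infty (fun z => f (z0 + z)%C) 0%C) by exact H.
    apply (C_holo_at_infty_translate _ _ (- z0)).
    apply (C_holo_at_ext (fun w => if Ceq_dec w 0%C then RtoC 0 else f (/ w)%C)); [|exact Hinf].
    intros w. destruct (Ceq_dec w 0%C); [reflexivity|]. f_equal. ring. }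
  destruct Dk0 as [lk Hlk]. destruct G_far_inv as [r [Hr Gfar]].
  assert (Dk : forall u, Cmod u < r -> C_holo_at k u).
  { intros u Hu. destruct (Ceq_dec u 0%C) as [E|E]; [subst; exists lk; exact Hlk|].
    apply (C_holo_at_ext_loc (fun w => f (z0 + / w))%C k u (Cmod (u - 0))); [apply Cmod_sub_pos, E| |].
    - intros w Hw. unfold k. symmetry. apply (if_Ceq_dec_far _ u w _ (fun w => f (z0 + / w)%C)), Hw.
    - apply (C_holo_at_comp f); [apply Hh, Gfar; auto | apply C_holo_at_affine_inv, E]. }
  assert (k0 : k 0%C = 0%C) by (unfold k; destruct (Ceq_dec 0%C 0%C); [reflexivity | contradiction]).
  destruct (removable_singularity k r lk Hr Dk k0 Hlk) as [L HL].
  exists lk. apply (C_holo_at_ext (fun u => if Ceq_dec u 0%C then lk else (k u / u)%C)); [|exists L; exact HL].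
  intros u. unfold k. destruct (Ceq_dec u 0%C); reflexivity.
Qed.

Lemma analytic_Ghat_plus_of_G f : analytic_G_plus m eta G f ->
  exists fhat, analytic_Ghat_plus m eta z0 G fhat /\ Psi_related m eta z0 f fhat.
Proof.
  intros Hf. destruct (Ghat_plus_value_at_0 f Hf) as [v Hv]. destruct Hf as [Hh [_ Hc]].
  exists (fun w => if Ceq_dec w 0%C then v else (f (z0 + / w) / w)%C).
  split; [split|].
  - intros w Hw. destruct (Ceq_dec w 0%C) as [E|E]; [subst w; exact Hv|].
    destruct Hw as [X|[z [Gz Ew]]]; [contradiction|].
    apply (C_holo_at_ext_loc (fun u => f (z0 + / u) / u)%C _ w (Cmod (w - 0)));
      [apply Cmod_sub_pos, E | intros u Hu; symmetry; apply (if_Ceq_dec_far _ w u v (fun u => f (z0 + / u) / u)%C), Hu |].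
    apply C_holo_at_inv_pushforward; [exact E|]. rewrite Ew, Psi_inv by (apply G_neq, Gz).
    apply Hh, Gz.
  - intros p [q [Gq Ep]]. apply cont_from_Climit_within.
    assert (Pn : p <> 0%C) by (rewrite Ep; apply Psi_neq_0, Gamma_neq, Gq).
    assert (Hq : (z0 + / p)%C = q) by (rewrite Ep; apply Psi_inv, Gamma_neq, Gq).
    destruct (Ceq_dec p 0%C) as [X|_]; [contradiction|].
    apply (Climit_within_ext_loc _ (fun u => f (z0 + / u) / u)%C _ p _ (Cmod (p - 0)));
      [apply Cmod_sub_pos, Pn | intros u Hu _; symmetry; apply (if_Ceq_dec_far _ p u v (fun u => f (z0 + / u) / u)%C), Hu |].
    apply (Climit_within_inv_pushforward G); [exact Pn | |rewrite Hq; apply Hc, Gq].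
    intros u [X|[z [Gz Eu]]] Hu; [contradiction|]. rewrite Eu, Psi_inv by (apply G_neq, Gz). exact Gz.
  - intros p Gp. assert (Pn := Psi_neq_0 z0 p (Gamma_neq p Gp)).
    destruct (Ceq_dec (Psi z0 p) 0%C); [contradiction|].
    rewrite Psi_inv by (apply Gamma_neq, Gp). field. exact Pn.
Qed.

Lemma analytic_Ghat_minus_of_G g : analytic_G_minus m eta G g ->
  exists ghat, analytic_Ghat_minus m eta z0 G ghat /\ Psi_related m eta z0 g ghat.
Proof.
  intros [Hh Hc]. exists (fun w => g (z0 + / w) / w)%C.
  split; [split; [|split]|].
  - intros w [z [Gz [Hz Ew]]]. rewrite Ew.
    apply C_holo_at_inv_pushforward; [apply Psi_neq_0, Hz|]. rewrite Psi_inv by exact Hz. apply Hh, Gz.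
  - unfold C_holo_at_infty.
    apply (C_holo_at_ext (fun u => u * g (z0 + u))%C).
    + intros u. destruct (Ceq_dec u 0%C) as [E|E]; [subst; ring|].
      replace (/ / u)%C with u by (field; exact E). field. exact E.
    + apply C_holo_at_mult; [apply C_holo_at_id|].
      apply (C_holo_at_comp g (fun u => z0 + u)%C).
      * replace (z0 + 0)%C with z0 by ring. apply Hh, z0_Gminus.
      * eexists. apply is_Cderive_plus; [apply is_Cderive_const | apply is_Cderive_id].
  - intros p [q [Gq Ep]]. apply cont_from_Climit_within.
    assert (Pn : p <> 0%C) by (rewrite Ep; apply Psi_neq_0, Gamma_neq, Gq).
    assert (Hq : (z0 + / p)%C = q) by (rewrite Ep; apply Psi_inv, Gamma_neq, Gq).
    apply (Climit_within_inv_pushforward (Gminus m eta G)); [exact Pn | |rewrite Hq; apply Hc, Gq].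
    intros u [z [Gz [Hz Eu]]] _. rewrite Eu, Psi_inv by exact Hz. exact Gz.
  - intros p Gp. assert (Pn := Psi_neq_0 z0 p (Gamma_neq p Gp)).
    rewrite Psi_inv by (apply Gamma_neq, Gp). field. exact Pn.
Qed.

(* [ghat (1/u)] vanishes at [u = 0], so the removable singularity theorem applies to its quotient by [u]. *)
Let G_minus_value_at_z0 ghat : analytic_Ghat_minus m eta z0 G ghat ->
  exists v, C_holo_at (fun u => if Ceq_dec u 0%C then v else (ghat (/ u) / u)%C) 0%C.
Proof.
  intros [Hh [[lm Hlm] _]].
  set (k := fun u : C => if Ceq_dec u 0%C then RtoC 0 else ghat (/ u)%C) in Hlm.
  destruct Gminus_ball as [r0 [Hr0 Hball]].
  assert (Dk : forall u, Cmod u < r0 -> C_holo_at k u).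
  { intros u Hu. destruct (Ceq_dec u 0%C) as [E|E]; [subst; exists lm; exact Hlm|].
    assert (Gm : Gminushat m eta z0 G (/ u)%C).
    { exists (z0 + u)%C. split; [|split].
      - apply Hball. replace (z0 + u - z0)%C with u by ring. exact Hu.
      - intro X. apply E. replace u with ((z0 + u) - z0)%C by ring. rewrite X. ring.
      - unfold Psi. f_equal. ring. }
    apply (C_holo_at_ext_loc (fun w => ghat (/ w))%C k u (Cmod (u - 0))); [apply Cmod_sub_pos, E| |].
    - intros w Hw. unfold k. symmetry. apply (if_Ceq_dec_far _ u w _ (fun w => ghat (/ w))%C), Hw.
    - apply (C_holo_at_comp ghat); [apply Hh, Gm | eexists; apply is_Cderive_inv, E]. }
  assert (k0 : k 0%C = 0%C) by (unfold k; destruct (Ceq_dec 0%C 0%C); [reflexivity | contradiction]).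
  destruct (removable_singularity k r0 lm Hr0 Dk k0 Hlm) as [L HL].
  exists lm. apply (C_holo_at_ext (fun u => if Ceq_dec u 0%C then lm else (k u / u)%C)); [|exists L; exact HL].
  intros u. unfold k. destruct (Ceq_dec u 0%C); reflexivity.
Qed.

Lemma analytic_G_minus_of_hat ghat : analytic_Ghat_minus m eta z0 G ghat ->
  exists g, analytic_G_minus m eta G g /\ Psi_related m eta z0 g ghat.
Proof.
  intros Hg. destruct (G_minus_value_at_z0 ghat Hg) as [v Hv]. destruct Hg as [Hh [_ Hc]].
  set (g := fun z => if Ceq_dec z z0 then v else (Psi z0 z * ghat (Psi z0 z))%C).
  assert (g_near : forall z w, Cmod (w - z) < Cmod (z - z0) -> (Psi z0 w * ghat (Psi z0 w))%C = g w)
    by (intros z w Hw; symmetry; apply (if_Ceq_dec_far _ z w v (fun w => Psi z0 w * ghat (Psi z0 w))%C), Hw).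
  assert (g_off : forall z, z <> z0 -> g z = (Psi z0 z * ghat (Psi z0 z))%C)
    by (intros z Hz; unfold g; destruct (Ceq_dec z z0); [contradiction | reflexivity]).
  exists g. split; [split|].
  - intros z Gz. destruct (Ceq_dec z z0) as [E|E].
    + subst z. apply (C_holo_at_ext (fun z => (if Ceq_dec (z - z0)%C 0%C then v else (ghat (/ (z - z0)) / (z - z0)))%C)).
      * intros z. unfold g, Psi. destruct (Ceq_dec z z0) as [E|E], (Ceq_dec (z - z0)%C 0%C) as [X|X];
          [reflexivity | exfalso; apply X; rewrite E; ring | | unfold Cdiv; ring].
        exfalso. apply E. replace z with ((z - z0) + z0)%C by ring. rewrite X. ring.
      * apply (C_holo_at_comp (fun u => if Ceq_dec u 0%C then v else (ghat (/ u) / u)%C) (fun z => z - z0)%C).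
        -- replace (z0 - z0)%C with (RtoC 0) by ring. exact Hv.
        -- eexists. apply is_Cderive_minus; [apply is_Cderive_id | apply is_Cderive_const].
    + apply (C_holo_at_ext_loc _ g z (Cmod (z - z0)) (Cmod_sub_pos z z0 E) (g_near z)).
      apply C_holo_at_Psi_pullback; [exact E|]. apply Hh. exists z. auto.
  - intros p Hp. assert (Hpz := Gamma_neq p Hp). apply cont_from_Climit_within.
    rewrite (g_off p Hpz).
    apply (Climit_within_ext_loc _ (fun w => Psi z0 w * ghat (Psi z0 w))%C g p _ (Cmod (p - z0)));
      [apply Cmod_sub_pos, Hpz | intros w Hw _; apply (g_near p w Hw) |].
    apply (Climit_within_Psi_pullback _ (Gminushat m eta z0 G)); [exact Hpz | |].
    + intros z Gz Hz. exists z. auto.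
    + apply Hc. exists p. auto.
  - intros p Hp. apply g_off, Gamma_neq, Hp.
Qed.

End Transfer.

(* [bc] is the boundary condition defining the space: [g = Re v] for the
   R-spaces, [g = v] for the S-spaces. *)
Lemma boundary_space_transfer (m : nat) (eta : nat -> R -> C) (z0 : C) (A : nat -> R -> C)
  (P Phat : (C -> C) -> Prop) (bc : R -> C -> Prop) (gam : nat -> R -> R) :
  (forall fhat, Phat fhat -> exists f, P f /\ Psi_related m eta z0 f fhat) ->
  (forall f, P f -> exists fhat, Phat fhat /\ Psi_related m eta z0 f fhat) ->
  (in_H m gam /\ exists fhat, Phat fhat /\ forall k s, (k < m)%nat ->
     bc (gam k s) (Cmult (Ahat z0 eta A k s) (fhat (zeta z0 eta k s)))) <->
  (in_H m gam /\ exists f, P f /\ forall k s, (k < m)%nat ->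
     bc (gam k s) (Cmult (A k s) (f (eta k s)))).
Proof.
  intros Hto Hfrom.
  assert (Hbd : forall f fhat k s, (k < m)%nat -> Psi_related m eta z0 f fhat ->
            Cmult (A k s) (f (eta k s)) = Cmult (Ahat z0 eta A k s) (fhat (zeta z0 eta k s))).
  { intros f fhat k s Hk Hrel. rewrite Hrel by (exists k; split; [exact Hk | exists s; reflexivity]).
    unfold Ahat, zeta. ring. }
  split; intros [HH [f [Hf Hb]]]; split; auto.
  - destruct (Hto f Hf) as [g [Hg Hrel]]. exists g. split; [exact Hg|].
    intros k s Hk. rewrite (Hbd g f k s Hk Hrel). auto.
  - destruct (Hfrom f Hf) as [fhat [Hfh Hrel]]. exists fhat. split; [exact Hfh|].
    intros k s Hk. rewrite <- (Hbd f fhat k s Hk Hrel). auto.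
Qed.

Theorem lemma4p2 (m : nat) (eta : nat -> R -> C) (G : C -> Prop)
  (A : nat -> R -> C) (z0 : C) :
  setting m eta G ->
  (* A : nonvanishing, 2pi-periodic, continuously differentiable on J *)
  (forall k, (k < m)%nat ->
     periodic2pi (A k) /\ C1_curve (A k) /\ forall s, A k s <> 0%C) ->
  (* z0 in G_m *)
  inside eta (m - 1)%nat z0 ->
  (forall gam, Rplushat_sp m eta G z0 A gam <-> Rplus_sp m eta G A gam) /\
  (forall gam, Splushat_sp m eta G z0 A gam <-> Splus_sp m eta G A gam) /\
  (forall gam, Rminushat_sp m eta G z0 A gam <-> Rminus_sp m eta G A gam) /\
  (forall gam, Sminushat_sp m eta G z0 A gam <-> Sminus_sp m eta G A gam).
Proof.
  (* The regularity of [A] plays no role: boundary values are matched pointwise. *)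
  intros HS _ Hz0.
  assert (Plus_to := analytic_G_plus_of_hat m eta G z0 HS Hz0).
  assert (Plus_from := analytic_Ghat_plus_of_G m eta G z0 HS Hz0).
  assert (Minus_to := analytic_G_minus_of_hat m eta G z0 HS Hz0).
  assert (Minus_from := analytic_Ghat_minus_of_G m eta G z0 HS Hz0).
  split; [|split; [|split]]; intros gam.
  - exact (boundary_space_transfer m eta z0 A _ _ (fun g v => g = Re v) gam Plus_to Plus_from).
  - exact (boundary_space_transfer m eta z0 A _ _ (fun g v => RtoC g = v) gam Plus_to Plus_from).
  - exact (boundary_space_transfer m eta z0 A _ _ (fun g v => g = Re v) gam Minus_to Minus_from).
  - exact (boundary_space_transfer m eta z0 A _ _ (fun g v => RtoC g = v) gam Minus_to Minus_from).
Qed.
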